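(* Under the hypotheses of the annealed critical exponents theorem (weight regularity, and either $\mathbb E[W^4]<\infty$ or the power-law tail condition with $\tau\in(3,5]$), with $\boldsymbol\beta,\boldsymbol\delta$ the corresponding values ($\boldsymbol\beta=1/2,\boldsymbol\delta=3$ if $\mathbb E[W^4]<\infty$; $\boldsymbol\beta=1/(\tau-3),\boldsymbol\delta=\tau-2$ if $\tau\in(3,5)$), there exist $\varepsilon>0$ and constants $c_1,C_1>0$ such that for all $B\in(0,\varepsilon)$ and $\beta\in(\beta_c,\beta_c+\varepsilon)$: if $\tau\ne5$, $c_1\big((\beta-\beta_c)^{\boldsymbol\beta}+B^{1/\boldsymbol\delta}\big)\le \widetilde M(\beta,B)\le C_1\big((\beta-\beta_c)^{\boldsymbol\beta}+B^{1/\boldsymbol\delta}\big)$; if $\tau=5$, the same holds with $(\beta-\beta_c)^{\boldsymbol\beta}+B^{1/\boldsymbol\delta}$ replaced by $\big(\frac{\beta-\beta_c}{\log(1/(\beta-\beta_c))}\big)^{1/2}+\big(\frac{B}{\log(1/B)}\big)^{1/3}$.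
   Context: Weights $w_i>0$, $W_N=w_{U_N}$ with $U_N$ uniform on $[N]$. Weight regularity condition: $W_N\to W$ in distribution, $\mathbb E[W_N^2]\to\mathbb E[W^2]<\infty$, $\mathbb E[W]>0$. Power-law tail condition with exponent $\tau$: constants $C_W>c_W>0$, $w_0>1$ with $c_Ww^{-(\tau-1)}\le\mathbb P(W>w)\le C_Ww^{-(\tau-1)}$ for $w>w_0$. $\nu=\mathbb E[W^2]/\mathbb E[W]$, $\beta_c={\rm asinh}(1/\nu)$, $\alpha(\beta)=\sqrt{\sinh(\beta)/\mathbb E[W]}$. For $B>0$, $z^*(\beta,B)$ is the unique positive solution of $z=\mathbb E[\tanh(\alpha(\beta)Wz+B)\alpha(\beta)W]$ and $\widetilde M(\beta,B)=\mathbb E[\tanh(\alpha(\beta)Wz^*+B)]$ is the limiting annealed magnetization of the Ising model on the generalized random graph $\mathrm{GRG}_N(\boldsymbol w)$ (edges independent with probability $w_iw_j/(\ell_N+w_iw_j)$, $\ell_N=\sum_iw_i$). *)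

From Stdlib Require Import Reals Lra.
Open Scope R_scope.

(* The law of a nonnegative random variable W is represented by its   *)
(* survival (tail) function  Fbar x = P(W > x).  The conditions below *)
(* characterise exactly the tail functions of probability laws on     *)
(* [0, +oo).                                                          *)
Record nonneg_law := {
  Fbar : R -> R;
  Fbar_range : forall x, 0 <= Fbar x <= 1;
  Fbar_neg : forall x, x < 0 -> Fbar x = 1;
  Fbar_mono : forall x y, x <= y -> Fbar y <= Fbar x;
  Fbar_rcont : forall x eps, 0 < eps ->
      exists d, 0 < d /\ forall y, x <= y < x + d -> Fbar x - Fbar y < eps;
  Fbar_infty : forall eps, 0 < eps ->
      exists M, forall x, M <= x -> Fbar x < eps
}.

(* Lower Lebesgue-Stieltjes sum of E[g(W)] along the partition
   0 = x 0 < x 1 < ... < x n :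
     g(0) P(W = 0) + sum_{i<n} g(x i) P(x i < W <= x (i+1)) + g(x n) P(W > x n). *)
Fixpoint inner_sum (L : nonneg_law) (g : R -> R) (x : nat -> R) (n : nat) : R :=
  match n with
  | O => 0
  | S k => inner_sum L g x k + g (x k) * (Fbar L (x k) - Fbar L (x (S k)))
  end.

Definition lower_sum (L : nonneg_law) (g : R -> R) (x : nat -> R) (n : nat) : R :=
  g 0 * (1 - Fbar L 0) + inner_sum L g x n + g (x n) * Fbar L (x n).

(* [Expect L g e] : E[g(W)] = e (finite), for W with law L.  This is the
   Lebesgue integral of g against the law of W whenever g is nonnegative,
   nondecreasing and continuous on [0,+oo) (the only case used below):
   it is the supremum of the lower sums (monotone convergence). *)
Definition Expect (L : nonneg_law) (g : R -> R) (e : R) : Prop :=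
  is_lub (fun s => exists (n : nat) (x : nat -> R),
            x O = 0 /\ (forall i, (i < n)%nat -> x i < x (S i)) /\
            s = lower_sum L g x n) e.

Definition finite_moment (L : nonneg_law) (g : R -> R) : Prop :=
  exists e, Expect L g e.

(* w N i, i < N, are the weights of GRG_N(w); W_N = w_{U_N}. *)
Fixpoint count_above (w : nat -> R) (x : R) (N : nat) : R :=
  match N with
  | O => 0
  | S k => count_above w x k + (if Rlt_dec x (w k) then 1 else 0)
  end.

Definition FbarN (w : nat -> nat -> R) (N : nat) (x : R) : R :=
  count_above (w N) x N / INR N.

Fixpoint sum_sq (w : nat -> R) (N : nat) : R :=
  match N with
  | O => 0
  | S k => sum_sq w k + (w k) ^ 2
  end.

Definition second_momentN (w : nat -> nat -> R) (N : nat) : R :=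
  sum_sq (w N) N / INR N.

Definition weight_regularity (w : nat -> nat -> R) (L : nonneg_law)
  (EW EW2 : R) : Prop :=
  (forall N i, (i < N)%nat -> 0 < w N i) /\
  (forall x, continuity_pt (Fbar L) x ->
     Un_cv (fun N => FbarN w (S N) x) (Fbar L x)) /\
  Expect L (fun t => t) EW /\ 0 < EW /\
  Expect L (fun t => t ^ 2) EW2 /\
  Un_cv (fun N => second_momentN w (S N)) EW2.

Definition power_law_tail (L : nonneg_law) (tau : R) : Prop :=
  exists cW CW w0, 0 < cW /\ cW < CW /\ 1 < w0 /\
    forall x, w0 < x ->
      cW * Rpower x (- (tau - 1)) <= Fbar L x <= CW * Rpower x (- (tau - 1)).

Definition nu (EW EW2 : R) : R := EW2 / EW.
Definition beta_c (EW EW2 : R) : R := arcsinh (1 / nu EW EW2).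
Definition alpha (EW beta : R) : R := sqrt (sinh beta / EW).

Definition is_zstar (L : nonneg_law) (EW beta B z : R) : Prop :=
  0 < z /\
  Expect L (fun t => tanh (alpha EW beta * t * z + B) * (alpha EW beta * t)) z.

Definition is_Mtilde (L : nonneg_law) (EW beta B m : R) : Prop :=
  exists z, is_zstar L EW beta B z /\
    Expect L (fun t => tanh (alpha EW beta * t * z + B)) m.

Definition crit_bounds (L : nonneg_law) (EW EW2 : R)
  (f : R -> R -> R) : Prop :=
  exists eps c1 C1, 0 < eps /\ 0 < c1 /\ 0 < C1 /\
    forall B beta, 0 < B < eps ->
      beta_c EW EW2 < beta < beta_c EW EW2 + eps ->
      (exists z, is_zstar L EW beta B z) /\
      forall m, is_Mtilde L EW beta B m ->
        c1 * f beta B <= m <= C1 * f beta B.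

From Stdlib Require Import Reals Lra Psatz List Sorting.Sorted ZArith.
From Stdlib Require Import FunctionalExtensionality Classical IndefiniteDescription.
Import ListNotations.
Open Scope R_scope.

(* Write [a = alpha beta], [t = beta - beta_c] and [s = a^2 E[W^2]]; then [s - 1] is comparable
   to [t].  As [tanh x <= x], the fixed-point equation [z = E[tanh (a W z + B) a W]] gives
     E[(a W z + B - tanh (a W z + B)) a W] = (s - 1) z + a B E[W] <= C (t z + B),
   and bounding this deficit from below by the contribution of [W] around the scale [1/(a z)]
   (cubic deficit of tanh, tail of [W]) gives [g z <= C (t z + B)], where [g z] is [z^3] when
   [E[W^4] < oo], [z^(tau - 2)] for [tau] in (3, 5), and [z^3 log (1/z)] at [tau = 5] (one term
   per dyadic scale below [1/(a z)]).  Conversely, [tanh (u + B) >= (1 - tanh B) tanh u + tanh B]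
   turns the fixed-point equation into [t z <= C e] and [B <= C e] for
   [e = E[(a W z - tanh (a W z)) a W]], and [e <= C g z] by the fourth moment or by integrating
   the tail by parts.  With [m <= C (z + B)] and [z <= C m], inverting these relations pins [m]
   between constant multiples of [t^(1/(delta - 1)) + B^(1/delta)], with the logarithmic
   corrections at [tau = 5]. *)

Lemma nondecreasing_of_derive (f f' : R -> R) a b : a <= b ->
  (forall c, a <= c <= b -> derivable_pt_lim f c (f' c)) ->
  (forall c, a <= c <= b -> 0 <= f' c) -> f a <= f b.
Proof.
  intros [Hab|Hab] Hd Hp; [|subst; lra].
  destruct (MVT_cor2 f f' a b Hab Hd) as [c [Hc1 Hc2]].
  assert (0 <= f' c) by (apply Hp; lra). nra.
Qed.

Lemma derivable_pt_lim_scal_l f c x l :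
  derivable_pt_lim f x l -> derivable_pt_lim (fun y => c * f y) x (c * l).
Proof. exact (derivable_pt_lim_scal f c x l). Qed.

Lemma derivable_pt_lim_pow_div3 (n : nat) x :
  derivable_pt_lim (fun x => x^n / 3) x (INR n * x^(pred n) / 3).
Proof.
  replace (fun x => x^n / 3) with (fun x => /3 * x^n)
    by (apply functional_extensionality; intro; field).
  replace (INR n * x ^ pred n / 3) with (/3 * (INR n * x ^ pred n)) by field.
  apply derivable_pt_lim_scal_l, derivable_pt_lim_pow.
Qed.

Lemma cosh_pos x : 0 < cosh x.
Proof. unfold cosh. pose proof (exp_pos x); pose proof (exp_pos (-x)). lra. Qed.

Lemma cosh_ge_1 x : 1 <= cosh x.
Proof.
  unfold cosh. rewrite exp_Ropp. pose proof (exp_pos x). set (y := exp x) in *.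
  assert (y + /y - 2 = (y - 1)^2 / y) by (field; lra).
  assert (0 <= (y-1)^2 / y)
    by (apply Rmult_le_pos; [apply pow2_ge_0| left; apply Rinv_0_lt_compat; lra]).
  lra.
Qed.

Lemma exp_le x y : x <= y -> exp x <= exp y.
Proof. intros [H|H]; [left; apply exp_increasing; auto| subst; lra]. Qed.

Lemma ln_le x y : 0 < x -> x <= y -> ln x <= ln y.
Proof. intros H [H1|H1]; [left; apply ln_increasing; auto| subst; lra]. Qed.

Lemma sinh_nonneg x : 0 <= x -> 0 <= sinh x.
Proof. intros H. unfold sinh. assert (exp (-x) <= exp x) by (apply exp_le; lra). lra. Qed.

Lemma cosh_le_compat x y : 0 <= x -> x <= y -> cosh x <= cosh y.
Proof.
  intros Hx Hxy. apply (nondecreasing_of_derive cosh sinh); auto.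
  - intros; apply derivable_pt_lim_cosh.
  - intros c Hc. apply sinh_nonneg. lra.
Qed.

Lemma sinh_sub_ge x y : x <= y -> y - x <= sinh y - sinh x.
Proof.
  intros H. assert (sinh x - x <= sinh y - y).
  { apply (nondecreasing_of_derive (fun x => sinh x - x) (fun c => cosh c - 1)); auto.
    - intros c _. apply derivable_pt_lim_minus.
      + apply derivable_pt_lim_sinh.
      + apply derivable_pt_lim_id.
    - intros c _. pose proof (cosh_ge_1 c). lra. }
  lra.
Qed.

Lemma sinh_sub_le x y K : 0 <= x -> x <= y -> cosh y <= K -> sinh y - sinh x <= K * (y - x).
Proof.
  intros Hx H HK. assert (K * x - sinh x <= K * y - sinh y).
  { apply (nondecreasing_of_derive (fun x => K * x - sinh x) (fun c => K * 1 - cosh c)); auto.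
    - intros c _. apply derivable_pt_lim_minus.
      + apply derivable_pt_lim_scal_l, derivable_pt_lim_id.
      + apply derivable_pt_lim_sinh.
    - intros c Hc. pose proof (cosh_le_compat c y ltac:(lra) ltac:(lra)). lra. }
  lra.
Qed.

Lemma tanh_exp x : tanh x = (exp (2*x) - 1) / (exp (2*x) + 1).
Proof.
  unfold tanh, cosh, sinh. rewrite exp_Ropp.
  replace (2*x) with (x+x) by ring. rewrite exp_plus.
  pose proof (exp_pos x). field. split; nra.
Qed.

Lemma tanh_add x y : tanh (x + y) = (tanh x + tanh y) / (1 + tanh x * tanh y).
Proof.
  rewrite !tanh_exp. replace (2*(x+y)) with (2*x + 2*y) by ring. rewrite exp_plus.
  pose proof (exp_pos (2*x)); pose proof (exp_pos (2*y)).
  field. repeat split; nra.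
Qed.

Lemma tanh_lt_1 x : tanh x < 1.
Proof.
  rewrite tanh_exp. pose proof (exp_pos (2*x)).
  apply (Rmult_lt_reg_r (exp (2*x) + 1)); [lra|].
  unfold Rdiv. rewrite Rmult_assoc, Rinv_l; lra.
Qed.

Lemma tanh_gt_m1 x : -1 < tanh x.
Proof.
  rewrite tanh_exp. pose proof (exp_pos (2*x)).
  apply (Rmult_lt_reg_r (exp (2*x) + 1)); [lra|].
  unfold Rdiv. rewrite Rmult_assoc, Rinv_l; lra.
Qed.

Lemma tanh_0 : tanh 0 = 0.
Proof. unfold tanh. rewrite sinh_0, cosh_0. field. Qed.

Lemma derivable_pt_lim_tanh x : derivable_pt_lim tanh x (1 - tanh x ^ 2).
Proof.
  pose proof (cosh_pos x).
  replace (1 - tanh x ^2) with ((cosh x * cosh x - sinh x * sinh x) / Rsqr (cosh x))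
    by (unfold tanh, Rsqr; field; lra).
  change tanh with (div_fct sinh cosh).
  apply derivable_pt_lim_div; [apply derivable_pt_lim_sinh| apply derivable_pt_lim_cosh| lra].
Qed.

Lemma tanh_le_compat x y : x <= y -> tanh x <= tanh y.
Proof.
  intros H. apply (nondecreasing_of_derive tanh (fun c => 1 - tanh c ^ 2)); auto.
  - intros; apply derivable_pt_lim_tanh.
  - intros c _. pose proof (tanh_lt_1 c); pose proof (tanh_gt_m1 c). nra.
Qed.

Lemma tanh_nonneg x : 0 <= x -> 0 <= tanh x.
Proof. intros H. rewrite <- tanh_0. now apply tanh_le_compat. Qed.

Lemma sub_tanh_le_compat x y : x <= y -> x - tanh x <= y - tanh y.
Proof.
  intros H.
  apply (nondecreasing_of_derive (fun x => x - tanh x) (fun c => 1 - (1 - tanh c ^ 2))); auto.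
  - intros; apply derivable_pt_lim_minus; [apply derivable_pt_lim_id| apply derivable_pt_lim_tanh].
  - intros c _. nra.
Qed.

Lemma tanh_le_id x : 0 <= x -> tanh x <= x.
Proof. intros H. pose proof (sub_tanh_le_compat 0 x H). rewrite tanh_0 in H0. lra. Qed.

Lemma sub_tanh_nonneg x : 0 <= x -> 0 <= x - tanh x.
Proof. intros. pose proof (tanh_le_id x H). lra. Qed.

Lemma tanh_lipschitz x y : x <= y -> 0 <= tanh y - tanh x <= y - x.
Proof.
  intros H. pose proof (tanh_le_compat x y H). pose proof (sub_tanh_le_compat x y H). lra.
Qed.

Lemma tanh_ge_cubic x : 0 <= x -> x - x^3/3 <= tanh x.
Proof.
  intros H.
  assert (tanh 0 - 0 + 0^3/3 <= tanh x - x + x^3/3).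
  { apply (nondecreasing_of_derive (fun x => tanh x - x + x^3/3)
            (fun c => (1 - tanh c ^2) - 1 + INR 3 * c^(pred 3) / 3)); auto.
    - intros c _. apply derivable_pt_lim_plus; [apply derivable_pt_lim_minus|].
      + apply derivable_pt_lim_tanh.
      + apply derivable_pt_lim_id.
      + apply (derivable_pt_lim_pow_div3 3).
    - intros c [Hc _]. pose proof (tanh_le_id c Hc). pose proof (tanh_nonneg c Hc). simpl. nra. }
  rewrite tanh_0 in *. lra.
Qed.

Lemma tanh_ge_lin x : 0 <= x <= 1 -> 2/3 * x <= tanh x.
Proof. intros H. pose proof (tanh_ge_cubic x (proj1 H)). nra. Qed.

Lemma sub_tanh_ge_cubic x : 0 <= x <= 1 -> 4/27 * x^3 <= x - tanh x.
Proof.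
  intros H.
  assert (0 - tanh 0 - 4/9 * (0^3/3) <= x - tanh x - 4/9 * (x^3/3)).
  { apply (nondecreasing_of_derive (fun x => x - tanh x - 4/9 * (x^3/3))
            (fun c => 1 - (1 - tanh c ^2) - 4/9 * (INR 3 * c^(pred 3) / 3))); [lra| |].
    - intros c _. apply derivable_pt_lim_minus; [apply derivable_pt_lim_minus|].
      + apply derivable_pt_lim_id.
      + apply derivable_pt_lim_tanh.
      + apply derivable_pt_lim_scal_l, (derivable_pt_lim_pow_div3 3).
    - intros c Hc. assert (0 <= c <= 1) by lra. pose proof (tanh_ge_lin c H0). simpl. nra. }
  rewrite tanh_0 in *. lra.
Qed.

Lemma sub_tanh_ge_cubic_min x : 0 <= x -> 4/27 * (Rmin x 1)^3 <= x - tanh x.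
Proof.
  intros H. unfold Rmin. destruct (Rle_dec x 1).
  - apply sub_tanh_ge_cubic; lra.
  - pose proof (sub_tanh_ge_cubic 1 ltac:(lra)). pose proof (sub_tanh_le_compat 1 x ltac:(lra)).
    lra.
Qed.

(* From the addition formula: tanh (u + B) - tanh B = (1 - tanh B ^ 2) tanh u / (1 + tanh u tanh B). *)
Lemma tanh_add_ge u B : 0 <= u -> 0 <= B -> (1 - tanh B) * tanh u + tanh B <= tanh (u + B).
Proof.
  intros Hu HB. rewrite tanh_add.
  pose proof (tanh_nonneg u Hu); pose proof (tanh_nonneg B HB).
  pose proof (tanh_lt_1 u); pose proof (tanh_lt_1 B).
  set (a := tanh u) in *; set (b := tanh B) in *.
  apply (Rmult_le_reg_r (1 + a * b)); [nra|].
  replace ((a + b) / (1 + a * b) * (1 + a * b)) with (a+b) by (field; nra).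
  assert (0 <= a*b*((1-a)*(1-b))) by (apply Rmult_le_pos; apply Rmult_le_pos; lra).
  assert ((a+b) - ((1-b)*a+b)*(1+a*b) = a*b*((1-a)*(1-b))) by ring. lra.
Qed.

Lemma Rpower_pos x y : 0 < Rpower x y.
Proof. unfold Rpower. apply exp_pos. Qed.

Lemma Rpower_le_base_nonpos x v y : 0 < x -> x <= v -> y <= 0 -> Rpower v y <= Rpower x y.
Proof.
  intros Hx Hxv Hy. unfold Rpower. apply exp_le. pose proof (ln_le x v Hx Hxv). nra.
Qed.

Lemma Rpower_le_exp_base_le_1 z p q : 0 < z <= 1 -> p <= q -> Rpower z q <= Rpower z p.
Proof.
  intros Hz Hpq. unfold Rpower. apply exp_le.
  assert (ln z <= 0) by (rewrite <- ln_1; apply ln_le; lra). nra.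
Qed.

Lemma Rpower_Rinv_base x y : 0 < x -> Rpower (/ x) y = Rpower x (- y).
Proof. intros. unfold Rpower. rewrite ln_Rinv by auto. f_equal. ring. Qed.

Lemma Rpower_succ_exp z k : 0 < z -> Rpower z k = z * Rpower z (k - 1).
Proof. intros. replace k with (1 + (k - 1)) at 1 by ring. rewrite Rpower_plus, Rpower_1; auto. Qed.

Lemma Rpower_ge_self B p : 0 < B < 1 -> 0 < p <= 1 -> B <= Rpower B p.
Proof.
  intros HB Hp. unfold Rpower. rewrite <- (exp_ln B) at 1 by lra. apply exp_le.
  assert (ln B < 0) by (rewrite <- ln_1; apply ln_increasing; lra). nra.
Qed.

Lemma Rpower_root_le x y p : 0 < x -> 0 < p -> Rpower x p <= y -> x <= Rpower y (1/p).
Proof.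
  intros Hx Hp H.
  assert (E : Rpower (Rpower x p) (1/p) = x)
    by (rewrite Rpower_mult; replace (p * (1/p)) with 1 by (field; lra); apply Rpower_1; auto).
  rewrite <- E. apply Rle_Rpower_l; [left; apply Rdiv_lt_0_compat; lra| split; auto; apply Rpower_pos].
Qed.

Lemma Rpower_root_ge x y p : 0 < x -> 0 < y -> 0 < p -> y <= Rpower x p -> Rpower y (1/p) <= x.
Proof.
  intros Hx Hy Hp H.
  assert (E : Rpower (Rpower x p) (1/p) = x)
    by (rewrite Rpower_mult; replace (p * (1/p)) with 1 by (field; lra); apply Rpower_1; auto).
  rewrite <- E. apply Rle_Rpower_l; [left; apply Rdiv_lt_0_compat; lra| lra].
Qed.

Lemma ln_le_sub_1 x : 0 < x -> ln x <= x - 1.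
Proof. intros H. pose proof (exp_ineq1_le (ln x)). rewrite exp_ln in H0; lra. Qed.

(* [(v^k - u^k) v^(1 - tau)] is at most the integral of [k x^(k - tau)] over [u, v],
   because [x^(1 - tau) >= v^(1 - tau)] there. *)
Lemma pow_increment_tail_le (k : nat) tau u v : 0 < u -> u < v -> (1 <= k)%nat ->
  INR k + 1 - tau <> 0 -> 1 <= tau ->
  (v^k - u^k) * Rpower v (1 - tau) <=
  INR k / (INR k + 1 - tau) * (Rpower v (INR k + 1 - tau) - Rpower u (INR k + 1 - tau)).
Proof.
  intros Hu Huv Hk Hp Ht. set (p := INR k + 1 - tau) in *.
  set (K := Rpower v (1 - tau)).
  assert (HG : INR k / p * Rpower u p - K * u^k <= INR k / p * Rpower v p - K * v^k).
  { apply (nondecreasing_of_derive (fun x => INR k / p * Rpower x p - K * x^k)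
       (fun x => INR k / p * (p * Rpower x (p - 1)) - K * (INR k * x ^ pred k))); [lra| |].
    - intros c Hc. apply derivable_pt_lim_minus; apply derivable_pt_lim_scal_l.
      + apply derivable_pt_lim_power. lra.
      + apply derivable_pt_lim_pow.
    - intros c Hc.
      assert (E : Rpower c (p - 1) = c ^ pred k * Rpower c (1 - tau)).
      { replace (p - 1) with (INR (pred k) + (1 - tau)).
        - rewrite Rpower_plus, Rpower_pow by lra. auto.
        - unfold p. destruct k; [lia|]. simpl pred. rewrite (S_INR k). lra. }
      rewrite E.
      assert (K <= Rpower c (1 - tau)) by (apply Rpower_le_base_nonpos; lra).
      assert (0 <= c ^ pred k) by (apply pow_le; lra).
      pose proof (pos_INR k).
      replace (INR k / p * (p * (c ^ pred k * Rpower c (1 - tau))) - K * (INR k * c ^ pred k))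
        with (INR k * c ^ pred k * (Rpower c (1 - tau) - K)) by (field; auto).
      apply Rmult_le_pos; [apply Rmult_le_pos|]; lra. }
  lra.
Qed.

Lemma pow4_increment_tail_le_ln u v : 0 < u -> u < v ->
  (v^4 - u^4) * Rpower v (- (5 - 1)) <= 4 * (ln v - ln u).
Proof.
  intros Hu Huv. rewrite Rpower_Ropp. replace (5 - 1) with (INR 4) by (simpl; ring).
  rewrite Rpower_pow by lra.
  set (r := u / v).
  assert (Hr : 0 < r) by (unfold r; apply Rdiv_lt_0_compat; lra).
  assert (Hl : ln u = ln r + ln v)
    by (unfold r; rewrite <- ln_mult by (try apply Rdiv_lt_0_compat; lra); f_equal; field; lra).
  assert (E : (v^4 - u^4) * / v^4 = 1 - r^4) by (unfold r; field; lra).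
  rewrite E, Hl. pose proof (ln_le_sub_1 (r^4) ltac:(apply pow_lt; lra)).
  rewrite ln_pow in H by lra. simpl INR in H. lra.
Qed.

Lemma m_sandwich c K1 K2 A f1 f2 B z m :
  0 < c -> 0 <= K1 -> 0 <= K2 -> 0 < A -> 0 < f1 -> 0 < f2 ->
  c * f1 <= z -> c * f2 <= z -> z <= K1 * f1 + K2 * f2 -> B <= f2 ->
  m <= A * (z + B) -> z <= A * m ->
  / 2 * c / A * (f1 + f2) <= m <= A * (K1 + K2 + 1) * (f1 + f2).
Proof.
  intros Hc HK1 HK2 HA Hf1 Hf2 Hl1 Hl2 Hu HB Hm1 Hm2. split.
  - apply (Rmult_le_reg_l (2 * A)); [lra|].
    replace (2 * A * (/ 2 * c / A * (f1 + f2))) with (c * f1 + c * f2) by (field; lra). lra.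
  - assert (z + B <= (K1 + K2 + 1) * (f1 + f2)) by nra. nra.
Qed.

Section PowerInversion.
Variables kap A t B z : R.
Hypothesis Hkap : 1 < kap.
Hypothesis HA : 0 < A.
Hypothesis Ht : 0 < t.
Hypothesis HB : 0 < B.
Hypothesis Hz : 0 < z.

Let p1 := 1 / (kap - 1).
Let p2 := 1 / kap.

Lemma root_upper_of_power_le : Rpower z kap <= A * (t * z + B) ->
  z <= Rpower (2*A) p1 * Rpower t p1 + Rpower (2*A) p2 * Rpower B p2.
Proof.
  intros H. rewrite !Rpower_mult_distr by lra.
  pose proof (Rpower_succ_exp z kap Hz) as Ez. pose proof (Rpower_pos z (kap - 1)).
  pose proof (Rpower_pos (2*A*t) p1). pose proof (Rpower_pos (2*A*B) p2).
  destruct (Rle_dec B (t * z)).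
  - assert (Rpower z (kap - 1) <= 2 * A * t).
    { rewrite Ez in H. apply (Rmult_le_reg_l z); auto. nra. }
    assert (z <= Rpower (2*A*t) p1) by (unfold p1; apply Rpower_root_le; lra).
    lra.
  - assert (Rpower z kap <= 2 * A * B) by nra.
    assert (z <= Rpower (2*A*B) p2) by (unfold p2; apply Rpower_root_le; lra).
    lra.
Qed.

Lemma root_lower_of_lin_le : t * z <= A * Rpower z kap -> Rpower (/A) p1 * Rpower t p1 <= z.
Proof.
  intros H. rewrite Rpower_mult_distr by (try apply Rinv_0_lt_compat; lra).
  unfold p1. apply Rpower_root_ge; auto.
  - apply Rmult_lt_0_compat; [apply Rinv_0_lt_compat|]; lra.
  - lra.
  - rewrite (Rpower_succ_exp z kap Hz) in H. apply (Rmult_le_reg_l A); auto.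
    replace (A * (/ A * t)) with t by (field; lra). apply (Rmult_le_reg_r z); auto. nra.
Qed.

Lemma root_lower_of_const_le : B <= A * Rpower z kap -> Rpower (/A) p2 * Rpower B p2 <= z.
Proof.
  intros H. rewrite Rpower_mult_distr by (try apply Rinv_0_lt_compat; lra).
  unfold p2. apply Rpower_root_ge; auto.
  - apply Rmult_lt_0_compat; [apply Rinv_0_lt_compat|]; lra.
  - lra.
  - apply (Rmult_le_reg_l A); auto. replace (A * (/ A * B)) with B by (field; lra). lra.
Qed.

End PowerInversion.

Lemma magnetization_power_bounds kap A t B z m :
  1 < kap -> 0 < A -> 0 < t -> 0 < B < 1 -> 0 < z ->
  Rpower z kap <= A * (t * z + B) -> t * z <= A * Rpower z kap -> B <= A * Rpower z kap ->
  m <= A * (z + B) -> z <= A * m ->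
  / 2 * Rmin (Rpower (/A) (1/(kap-1))) (Rpower (/A) (1/kap)) / A
    * (Rpower t (1/(kap-1)) + Rpower B (1/kap)) <= m <=
  A * (Rpower (2*A) (1/(kap-1)) + Rpower (2*A) (1/kap) + 1)
    * (Rpower t (1/(kap-1)) + Rpower B (1/kap)).
Proof.
  intros Hk HA Ht HB Hz H1 H2 H3 H4 H5.
  pose proof (Rmin_l (Rpower (/A) (1/(kap-1))) (Rpower (/A) (1/kap))).
  pose proof (Rmin_r (Rpower (/A) (1/(kap-1))) (Rpower (/A) (1/kap))).
  pose proof (Rpower_pos t (1/(kap-1))). pose proof (Rpower_pos B (1/kap)).
  assert (Rpower (/A) (1/(kap-1)) * Rpower t (1/(kap-1)) <= z)
    by (apply root_lower_of_lin_le; auto; lra).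
  assert (Rpower (/A) (1/kap) * Rpower B (1/kap) <= z)
    by (apply root_lower_of_const_le; auto; lra).
  apply (m_sandwich _ _ _ _ _ _ B z); auto; try (left; apply Rpower_pos).
  - unfold Rmin. destruct (Rle_dec _ _); apply Rpower_pos.
  - nra.
  - nra.
  - apply root_upper_of_power_le; lra.
  - apply Rpower_ge_self; auto. split; [apply Rdiv_lt_0_compat|]; unfold Rdiv.
    + lra.
    + lra.
    + rewrite Rmult_1_l. rewrite <- Rinv_1. apply Rinv_le_contravar; lra.
Qed.

Definition ell (x : R) := ln (1 / x).

Lemma ell_eq x : 0 < x -> ell x = - ln x.
Proof. intros. unfold ell, Rdiv. rewrite Rmult_1_l. apply ln_Rinv; auto. Qed.

Lemma ell_le_anti x y : 0 < x -> x <= y -> ell y <= ell x.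
Proof. intros. rewrite !ell_eq by lra. pose proof (ln_le x y H H0). lra. Qed.

Lemma mul_ell_le_1 x : 0 < x -> x * ell x <= 1.
Proof.
  intros H. rewrite ell_eq by lra. pose proof (ln_le_sub_1 (/x) ltac:(apply Rinv_0_lt_compat; lra)).
  rewrite ln_Rinv in H0 by lra. apply (Rmult_le_compat_l x) in H0; [|lra].
  replace (x * (/x - 1)) with (1 - x) in H0 by (field; lra). lra.
Qed.

Lemma ell_mul c x : 0 < c -> 0 < x -> ell (c * x) = ell x - ln c.
Proof. intros. rewrite !ell_eq by (try apply Rmult_lt_0_compat; lra). rewrite ln_mult by lra. ring. Qed.

Lemma ell_pow x n : 0 < x -> ell (x ^ n) = INR n * ell x.
Proof. intros. rewrite !ell_eq by (try apply pow_lt; lra). rewrite ln_pow by lra. ring. Qed.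

Lemma ell_ge_1 x : 0 < x <= exp (-1) -> 1 <= ell x.
Proof.
  intros H. rewrite ell_eq by lra.
  assert (ln x <= -1) by (rewrite <- (ln_exp (-1)); apply ln_le; lra). lra.
Qed.

Lemma ell_gt_of_lt_exp L x : 0 < x < exp (- L) -> L < ell x.
Proof.
  intros Hx. rewrite ell_eq by lra.
  assert (ln x < - L) by (rewrite <- (ln_exp (- L)); apply ln_increasing; lra). lra.
Qed.

Lemma pow_le_root z K q (k : nat) : 0 < z -> 0 < K -> 0 < q -> (1 <= k)%nat ->
  z ^ k <= K * q -> z <= Rpower K (1 / INR k) * Rpower q (1 / INR k).
Proof.
  intros Hz HK Hq Hk H. rewrite Rpower_mult_distr by lra. apply Rpower_root_le; auto.
  - apply lt_0_INR; lia.
  - rewrite Rpower_pow; auto.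
Qed.

Lemma pow_ge_root z K q (k : nat) : 0 < z -> 0 < K -> 0 < q -> (1 <= k)%nat ->
  K * q <= z ^ k -> Rpower K (1 / INR k) * Rpower q (1 / INR k) <= z.
Proof.
  intros Hz HK Hq Hk H. rewrite Rpower_mult_distr by lra. apply Rpower_root_ge; auto.
  - apply Rmult_lt_0_compat; auto.
  - apply lt_0_INR; lia.
  - rewrite Rpower_pow; auto.
Qed.

Definition log_threshold (A : R) := 2 * Rabs (ln (2*A)) + 2 * Rabs (ln A) + 1.

Section LogInversion.
Variables A t B z : R.
Hypothesis HA : 0 < A.
Hypothesis Ht : 0 < t < 1.
Hypothesis HB : 0 < B < 1.
Hypothesis Hz : 0 < z <= exp (-1).
Hypothesis Hellt : log_threshold A < ell t.
Hypothesis HellB : log_threshold A < ell B.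

Let threshold_facts :
  ln (2*A) <= Rabs (ln (2*A)) /\ - ln (2*A) <= Rabs (ln (2*A)) /\
  ln A <= Rabs (ln A) /\ - ln A <= Rabs (ln A) /\ 0 <= Rabs (ln (2*A)) /\ 0 <= Rabs (ln A).
Proof.
  pose proof (Rle_abs (- ln (2*A))). pose proof (Rle_abs (- ln A)). rewrite Rabs_Ropp in *.
  repeat split; auto using Rle_abs, Rabs_pos.
Qed.

Let z_lt_1 : z < 1.
Proof. pose proof (exp_increasing (-1) 0 ltac:(lra)). rewrite exp_0 in H. lra. Qed.

Lemma log_root_upper_t : z^2 * ell z <= 2 * A * t ->
  z <= Rpower (8*A) (1/2) * Rpower (t / ell t) (1/2).
Proof.
  intros E1. pose proof threshold_facts. unfold log_threshold in *.
  pose proof (ell_ge_1 z Hz) as Lz.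
  assert (E2 : z^2 <= (2*A) * t) by nra.
  assert (E3 : ell t / 4 <= ell z).
  { pose proof (ell_le_anti (z^2) ((2*A)*t) ltac:(apply pow_lt; lra) E2) as He.
    rewrite ell_pow, ell_mul in He by lra. simpl INR in He. lra. }
  assert (Hzz : z^2 <= (8*A) * (t / ell t)).
  { apply (Rmult_le_reg_r (ell z)); [lra|].
    apply Rle_trans with (2 * A * t); [lra|].
    replace (8 * A * (t / ell t) * ell z) with (2 * A * t * (4 * ell z / ell t)) by (field; lra).
    assert (1 <= 4 * ell z / ell t).
    { apply (Rmult_le_reg_r (ell t)); [lra|].
      replace (4 * ell z / ell t * ell t) with (4 * ell z) by (field; lra). lra. }
    assert (0 < 2 * A * t) by nra. nra. }
  pose proof (pow_le_root z (8*A) (t / ell t) 2 ltac:(lra) ltac:(lra)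
    ltac:(apply Rdiv_lt_0_compat; lra) ltac:(lia) Hzz) as Hi.
  simpl INR in Hi. replace (1+1) with 2 in Hi by ring. exact Hi.
Qed.

Lemma log_root_upper_B : z^3 * ell z <= 2 * A * B ->
  z <= Rpower (12*A) (1/3) * Rpower (B / ell B) (1/3).
Proof.
  intros E1. pose proof threshold_facts. unfold log_threshold in *.
  pose proof (ell_ge_1 z Hz) as Lz.
  assert (Hz3 : 0 < z^3) by (apply pow_lt; lra).
  assert (E2 : z^3 <= (2*A) * B) by nra.
  assert (E3 : ell B / 6 <= ell z).
  { pose proof (ell_le_anti (z^3) ((2*A)*B) Hz3 E2) as He.
    rewrite ell_pow, ell_mul in He by lra. simpl INR in He. lra. }
  assert (Hzz : z^3 <= (12*A) * (B / ell B)).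
  { apply (Rmult_le_reg_r (ell z)); [lra|].
    apply Rle_trans with (2 * A * B); [lra|].
    replace (12 * A * (B / ell B) * ell z) with (2 * A * B * (6 * ell z / ell B)) by (field; lra).
    assert (1 <= 6 * ell z / ell B).
    { apply (Rmult_le_reg_r (ell B)); [lra|].
      replace (6 * ell z / ell B * ell B) with (6 * ell z) by (field; lra). lra. }
    assert (0 < 2 * A * B) by nra. nra. }
  pose proof (pow_le_root z (12*A) (B / ell B) 3 ltac:(lra) ltac:(lra)
    ltac:(apply Rdiv_lt_0_compat; lra) ltac:(lia) Hzz) as Hi.
  simpl INR in Hi. replace (1+1+1) with 3 in Hi by ring. exact Hi.
Qed.

Lemma log_root_upper : z^3 * ell z <= A * (t * z + B) ->
  z <= Rpower (8*A) (1/2) * Rpower (t / ell t) (1/2)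
       + Rpower (12*A) (1/3) * Rpower (B / ell B) (1/3).
Proof.
  intros H. pose proof (ell_ge_1 z Hz).
  assert (0 < Rpower (8*A) (1/2) * Rpower (t / ell t) (1/2))
    by (apply Rmult_lt_0_compat; apply Rpower_pos).
  assert (0 < Rpower (12*A) (1/3) * Rpower (B / ell B) (1/3))
    by (apply Rmult_lt_0_compat; apply Rpower_pos).
  destruct (Rle_dec B (t * z)).
  - assert (Hc : z^2 * ell z <= 2 * A * t).
    { apply (Rmult_le_reg_l z); [lra|].
      replace (z * (z^2 * ell z)) with (z^3 * ell z) by ring. nra. }
    pose proof (log_root_upper_t Hc). lra.
  - assert (Hc : z^3 * ell z <= 2 * A * B) by nra.
    pose proof (log_root_upper_B Hc). lra.
Qed.

Let ell_z_le_2 x : 0 < x < 1 -> log_threshold A < ell x -> x <= A * z -> ell z <= 2 * ell x.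
Proof.
  intros Hx Hl Hxz. pose proof threshold_facts. unfold log_threshold in *.
  assert (Hq : /A * x <= z).
  { apply (Rmult_le_reg_l A); [lra|]. replace (A * (/ A * x)) with x by (field; lra). lra. }
  pose proof (ell_le_anti (/A * x) z ltac:(apply Rmult_lt_0_compat; [apply Rinv_0_lt_compat|]; lra) Hq).
  rewrite ell_mul, ln_Rinv in H0 by (try apply Rinv_0_lt_compat; lra). lra.
Qed.

Lemma log_root_lower_t : t * z <= A * (z^3 * ell z) ->
  Rpower (/(2*A)) (1/2) * Rpower (t / ell t) (1/2) <= z.
Proof.
  intros H. pose proof (mul_ell_le_1 z (proj1 Hz)).
  assert (Hzl : z^3 * ell z <= z^2).
  { replace (z^3 * ell z) with (z^2 * (z * ell z)) by ring.
    replace (z^2) with (z^2 * 1) at 2 by ring. apply Rmult_le_compat_l; nra. }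
  assert (Htz : t <= A * z).
  { apply (Rmult_le_reg_r z); [lra|]. replace (A * z * z) with (A * z^2) by ring.
    apply Rle_trans with (A * (z^3 * ell z)); auto. apply Rmult_le_compat_l; lra. }
  pose proof (ell_z_le_2 t Ht Hellt Htz) as Ez.
  assert (0 < ell t) by (unfold log_threshold in Hellt; pose proof (Rabs_pos (ln (2*A)));
    pose proof (Rabs_pos (ln A)); lra).
  assert (HK : / (2*A) * (t / ell t) <= z^2).
  { assert (t <= A * z^2 * ell z) by (apply (Rmult_le_reg_r z); [lra|]; nra).
    apply (Rmult_le_reg_l (2 * A * ell t)); [nra|].
    replace (2 * A * ell t * (/ (2 * A) * (t / ell t))) with t by (field; lra).
    assert (0 <= A * z^2) by (apply Rmult_le_pos; [lra| apply pow2_ge_0]). nra. }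
  pose proof (pow_ge_root z (/(2*A)) (t / ell t) 2 ltac:(lra) ltac:(apply Rinv_0_lt_compat; lra)
    ltac:(apply Rdiv_lt_0_compat; lra) ltac:(lia) HK) as Hi.
  simpl INR in Hi. replace (1+1) with 2 in Hi by ring. exact Hi.
Qed.

Lemma log_root_lower_B : B <= A * (z^3 * ell z) ->
  Rpower (/(2*A)) (1/3) * Rpower (B / ell B) (1/3) <= z.
Proof.
  intros H. pose proof (mul_ell_le_1 z (proj1 Hz)). pose proof z_lt_1.
  assert (z^3 * ell z <= z).
  { replace (z^3 * ell z) with (z^2 * (z * ell z)) by ring.
    assert (z^2 <= z) by nra. assert (0 <= z^2) by nra. nra. }
  assert (HBz : B <= A * z) by nra.
  pose proof (ell_z_le_2 B HB HellB HBz) as Ez.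
  assert (0 < ell B) by (unfold log_threshold in HellB; pose proof (Rabs_pos (ln (2*A)));
    pose proof (Rabs_pos (ln A)); lra).
  assert (HK : / (2*A) * (B / ell B) <= z^3).
  { apply (Rmult_le_reg_l (2 * A * ell B)); [nra|].
    replace (2 * A * ell B * (/ (2 * A) * (B / ell B))) with B by (field; lra).
    assert (A * z^3 * ell z <= A * z^3 * (2 * ell B))
      by (apply Rmult_le_compat_l; [apply Rmult_le_pos; [lra| apply pow_le]|]; lra).
    nra. }
  pose proof (pow_ge_root z (/(2*A)) (B / ell B) 3 ltac:(lra) ltac:(apply Rinv_0_lt_compat; lra)
    ltac:(apply Rdiv_lt_0_compat; lra) ltac:(lia) HK) as Hi.
  simpl INR in Hi. replace (1+1+1) with 3 in Hi by ring. exact Hi.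
Qed.

End LogInversion.

Lemma le_Rpower_div_ell B : 0 < B < 1 -> 0 < ell B -> B <= Rpower (B / ell B) (1/3).
Proof.
  intros HB Hl.
  rewrite <- (Rpower_1 B) at 1 by lra. replace 1 with (3 * (1/3)) at 1 by field.
  rewrite <- Rpower_mult. apply Rle_Rpower_l; [lra| split; [apply Rpower_pos|]].
  replace 3 with (INR 3) by (simpl; ring). rewrite Rpower_pow by lra.
  apply (Rmult_le_reg_r (ell B)); [lra|].
  replace (B / ell B * ell B) with B by (field; lra).
  assert (B * ell B <= 1) by (apply mul_ell_le_1; lra).
  replace (B^3 * ell B) with (B^2 * (B * ell B)) by (simpl; ring). nra.
Qed.

Lemma magnetization_log_bounds A t B z m :
  0 < A -> 0 < t < 1 -> 0 < B < 1 -> 0 < z <= exp (-1) ->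
  log_threshold A < ell t -> log_threshold A < ell B ->
  z^3 * ell z <= A * (t * z + B) -> t * z <= A * (z^3 * ell z) -> B <= A * (z^3 * ell z) ->
  m <= A * (z + B) -> z <= A * m ->
  / 2 * Rmin (Rpower (/(2*A)) (1/2)) (Rpower (/(2*A)) (1/3)) / A
    * (Rpower (t / ell t) (1/2) + Rpower (B / ell B) (1/3)) <= m <=
  A * (Rpower (8*A) (1/2) + Rpower (12*A) (1/3) + 1)
    * (Rpower (t / ell t) (1/2) + Rpower (B / ell B) (1/3)).
Proof.
  intros HA Ht HB Hz Hlt HlB H1 H2 H3 H4 H5.
  pose proof (Rmin_l (Rpower (/(2*A)) (1/2)) (Rpower (/(2*A)) (1/3))).
  pose proof (Rmin_r (Rpower (/(2*A)) (1/2)) (Rpower (/(2*A)) (1/3))).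
  pose proof (Rpower_pos (t / ell t) (1/2)). pose proof (Rpower_pos (B / ell B) (1/3)).
  assert (Rpower (/(2*A)) (1/2) * Rpower (t / ell t) (1/2) <= z)
    by (eapply log_root_lower_t; eauto).
  assert (Rpower (/(2*A)) (1/3) * Rpower (B / ell B) (1/3) <= z)
    by (eapply log_root_lower_B; eauto).
  assert (0 < ell B) by (unfold log_threshold in HlB; pose proof (Rabs_pos (ln (2*A)));
    pose proof (Rabs_pos (ln A)); lra).
  apply (m_sandwich _ _ _ _ _ _ B z); auto; try (left; apply Rpower_pos).
  - unfold Rmin. destruct (Rle_dec _ _); apply Rpower_pos.
  - nra.
  - nra.
  - apply log_root_upper; auto.
  - apply le_Rpower_div_ell; auto.
Qed.

Section LowerSums.
Variable L : nonneg_law.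
Notation F := (Fbar L).

Fixpoint ltsum (g : R -> R) (a : R) (l : list R) : R :=
  match l with
  | nil => g a * F a
  | b :: l' => g a * (F a - F b) + ltsum g b l'
  end.

(* [lsum g l] is [lower_sum] along the partition [0 :: l], stored as a list so that
   refining a partition is list insertion. *)
Definition lsum g l := g 0 * (1 - F 0) + ltsum g 0 l.
Definition pos_partition (l : list R) := Sorted Rlt (0 :: l).

Lemma last_cons2 (c a : R) l : last (c :: l) a = last l c.
Proof. revert c a; induction l as [|r l IH]; intros c a; [reflexivity|].
  change (last (r :: l) a = last (r :: l) c). rewrite !IH. auto. Qed.

Lemma ltsum_snoc g a l b :
  ltsum g a (l ++ [b]) = ltsum g a l - g (last l a) * F b + g b * F b.
Proof.
  revert a. induction l as [|c l IH]; intros a.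
  - simpl. ring.
  - change (g a * (F a - F c) + ltsum g c (l ++ [b]) =
      g a * (F a - F c) + ltsum g c l - g (last (c :: l) a) * F b + g b * F b).
    rewrite IH. rewrite last_cons2. ring.
Qed.

Lemma last_map_seq (x : nat -> R) n : x 0%nat = 0 -> last (map x (seq 1 n)) 0 = x n.
Proof.
  intros H0. destruct n. simpl. auto.
  rewrite seq_S, map_app. simpl. rewrite last_last. f_equal.
Qed.

Lemma inner_ltsum g x n : x 0%nat = 0 ->
  ltsum g 0 (map x (seq 1 n)) = inner_sum L g x n + g (x n) * F (x n).
Proof.
  intros H0. induction n.
  - simpl. rewrite H0. ring.
  - rewrite seq_S, map_app. simpl (map x [(1 + n)%nat]).
    rewrite ltsum_snoc, IHn, last_map_seq by auto. simpl. ring.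
Qed.

Lemma sorted_map_seq (x : nat -> R) k n :
  (forall i, (i < n)%nat -> x (k + i)%nat < x (S (k + i))) -> Sorted Rlt (map x (seq k (S n))).
Proof.
  revert k. induction n; intros k H.
  - simpl. constructor. constructor. constructor.
  - change (seq k (S (S n))) with (k :: seq (S k) (S n)). simpl map.
    constructor.
    + apply IHn. intros i Hi. replace (S k + i)%nat with (k + S i)%nat by lia. apply H. lia.
    + simpl. constructor. pose proof (H 0%nat ltac:(lia)) as H'. rewrite Nat.add_0_r in H'. exact H'.
Qed.

Lemma lower_sum_as_lsum x n : x 0%nat = 0 -> (forall i, (i < n)%nat -> x i < x (S i)) ->
  pos_partition (map x (seq 1 n)) /\ forall g, lower_sum L g x n = lsum g (map x (seq 1 n)).
Proof.
  intros H0 Hi. split.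
  - unfold pos_partition. rewrite <- H0. change (x 0%nat :: map x (seq 1 n)) with (map x (seq 0 (S n))).
    apply sorted_map_seq. intros i; simpl; apply Hi.
  - intros g. unfold lower_sum, lsum. rewrite inner_ltsum by auto. ring.
Qed.

Lemma map_nth_shift (l : list R) (d : R) :
  map (fun i => nth i (d :: l) 0) (seq 1 (length l)) = l.
Proof.
  rewrite <- seq_shift, map_map. simpl.
  induction l as [|a l IH]; simpl; auto.
  f_equal. rewrite <- seq_shift, map_map. simpl. exact IH.
Qed.

Lemma sorted_nth (l : list R) i : Sorted Rlt l -> (S i < length l)%nat ->
  nth i l 0 < nth (S i) l 0.
Proof.
  revert i. induction l as [|a l IH]; intros i Hs Hl; simpl in *. lia.
  inversion Hs; subst. destruct l as [|b l]. simpl in Hl; lia.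
  destruct i.
  - simpl. inversion H2; auto.
  - apply IH; auto. simpl in *; lia.
Qed.

Lemma pos_partition_as_seq l : pos_partition l -> exists x n, x 0%nat = 0 /\ (forall i, (i < n)%nat -> x i < x (S i))
  /\ map x (seq 1 n) = l.
Proof.
  intros Hl. exists (fun i => nth i (0 :: l) 0), (length l). repeat split.
  - intros i Hi. apply sorted_nth; auto. simpl; lia.
  - apply map_nth_shift.
Qed.

Definition lsum_set g := fun s => exists l, pos_partition l /\ s = lsum g l.

Lemma lower_sums_lsum_set g s :
  (exists (n : nat) (x : nat -> R), x O = 0 /\ (forall i, (i < n)%nat -> x i < x (S i)) /\
            s = lower_sum L g x n) <-> lsum_set g s.
Proof.
  split.
  - intros [n [x [H0 [Hi Hs]]]]. destruct (lower_sum_as_lsum x n H0 Hi) as [Hok Heq].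
    exists (map x (seq 1 n)). split; auto. rewrite Hs; apply Heq.
  - intros [l [Hok Hs]]. destruct (pos_partition_as_seq l Hok) as [x [n [H0 [Hi Hm]]]].
    exists n, x. repeat split; auto. rewrite Hs. destruct (lower_sum_as_lsum x n H0 Hi) as [_ Heq].
    rewrite Heq, Hm. auto.
Qed.

Lemma Expect_lsum_lub g e : Expect L g e <-> is_lub (lsum_set g) e.
Proof.
  unfold Expect, is_lub, is_upper_bound. split; intros [H1 H2]; split.
  - intros s Hs. apply H1. apply lower_sums_lsum_set. auto.
  - intros b Hb. apply H2. intros s Hs. apply Hb. apply lower_sums_lsum_set. auto.
  - intros s Hs. apply H1. apply lower_sums_lsum_set. auto.
  - intros b Hb. apply H2. intros s Hs. apply Hb. apply lower_sums_lsum_set. auto.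
Qed.

Lemma ltsum_const c a l : ltsum (fun _ => c) a l = c * F a.
Proof. revert a; induction l; intros; simpl; [ring| rewrite IHl; ring]. Qed.

Lemma lsum_const c l : lsum (fun _ => c) l = c.
Proof. unfold lsum. rewrite ltsum_const. ring. Qed.

Lemma ltsum_lin c1 c2 f g a l :
  ltsum (fun t => c1 * f t + c2 * g t) a l = c1 * ltsum f a l + c2 * ltsum g a l.
Proof. revert a; induction l; intros; simpl; [ring| rewrite IHl; ring]. Qed.

Lemma lsum_lin c1 c2 f g l :
  lsum (fun t => c1 * f t + c2 * g t) l = c1 * lsum f l + c2 * lsum g l.
Proof. unfold lsum. rewrite ltsum_lin. ring. Qed.

Lemma ltsum_mono f g a l : Sorted Rlt (a :: l) -> 0 <= a ->
  (forall t, 0 <= t -> f t <= g t) -> ltsum f a l <= ltsum g a l.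
Proof.
  revert a; induction l as [|b l IH]; intros a Hs Ha Hfg; simpl.
  - pose proof (Fbar_range L a). pose proof (Hfg a Ha). nra.
  - inversion Hs; subst. inversion H2; subst.
    pose proof (Fbar_mono L a b (Rlt_le _ _ H0)). pose proof (Hfg a Ha).
    assert (f a * (F a - F b) <= g a * (F a - F b)) by nra.
    pose proof (IH b H1 ltac:(lra) Hfg). lra.
Qed.

Lemma lsum_mono f g l : pos_partition l -> (forall t, 0 <= t -> f t <= g t) -> lsum f l <= lsum g l.
Proof.
  intros Hl Hfg. unfold lsum. pose proof (ltsum_mono f g 0 l Hl (Rle_refl 0) Hfg).
  pose proof (Fbar_range L 0). pose proof (Hfg 0 (Rle_refl 0)). nra.
Qed.

Lemma pos_partition_nil : pos_partition [].
Proof. unfold pos_partition. constructor; constructor. Qed.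

Lemma lsum_le_Expect g e l : Expect L g e -> pos_partition l -> lsum g l <= e.
Proof. intros H Hl. apply Expect_lsum_lub in H. apply H. exists l; auto. Qed.

Lemma Expect_le_of_lsum_le g e M : Expect L g e -> (forall l, pos_partition l -> lsum g l <= M) -> e <= M.
Proof.
  intros H Hb. apply Expect_lsum_lub in H. apply H. intros s [l [Hl ->]]. auto.
Qed.

Lemma Expect_exists_of_bounded g M : (forall l, pos_partition l -> lsum g l <= M) -> exists e, Expect L g e.
Proof.
  intros Hb. destruct (completeness (lsum_set g)) as [m Hm].
  - exists M. intros s [l [Hl ->]]. auto.
  - exists (lsum g []). exists []. split; auto. apply pos_partition_nil.
  - exists m. apply Expect_lsum_lub. auto.
Qed.

Lemma Expect_exists_of_dominated g h eh : Expect L h eh -> (forall t, 0 <= t -> g t <= h t) ->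
  exists e, Expect L g e.
Proof.
  intros H Hgh. apply (Expect_exists_of_bounded g eh). intros l Hl.
  apply Rle_trans with (lsum h l). apply lsum_mono; auto. apply lsum_le_Expect; auto.
Qed.

Lemma Expect_le f g ef eg : Expect L f ef -> Expect L g eg -> (forall t, 0 <= t -> f t <= g t) ->
  ef <= eg.
Proof.
  intros Hf Hg Hfg. apply (Expect_le_of_lsum_le f ef eg Hf). intros l Hl.
  apply Rle_trans with (lsum g l). apply lsum_mono; auto. apply lsum_le_Expect; auto.
Qed.

Lemma Expect_le_lin2 f g1 g2 ef e1 e2 c1 c2 : Expect L f ef -> Expect L g1 e1 -> Expect L g2 e2 ->
  0 <= c1 -> 0 <= c2 -> (forall t, 0 <= t -> f t <= c1 * g1 t + c2 * g2 t) ->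
  ef <= c1 * e1 + c2 * e2.
Proof.
  intros Hf H1 H2 Hc1 Hc2 Hfg. apply (Expect_le_of_lsum_le f ef _ Hf). intros l Hl.
  apply Rle_trans with (lsum (fun t => c1 * g1 t + c2 * g2 t) l). apply lsum_mono; auto.
  rewrite lsum_lin. pose proof (lsum_le_Expect _ _ l H1 Hl). pose proof (lsum_le_Expect _ _ l H2 Hl). nra.
Qed.

Lemma Expect_const c : Expect L (fun _ => c) c.
Proof.
  apply Expect_lsum_lub. split.
  - intros s [l [_ ->]]. rewrite lsum_const. lra.
  - intros b Hb. apply Hb. exists []. split. apply pos_partition_nil. rewrite lsum_const. auto.
Qed.

Lemma Expect_scale g e c : Expect L g e -> 0 <= c -> Expect L (fun t => c * g t) (c * e).
Proof.
  intros H Hc. apply Expect_lsum_lub in H. apply Expect_lsum_lub. destruct H as [H1 H2].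
  assert (Hs : forall l, lsum (fun t => c * g t) l = c * lsum g l).
  { intros l. rewrite <- (Rplus_0_r (c * lsum g l)).
    replace (c * lsum g l + 0) with (c * lsum g l + 0 * lsum g l) by ring.
    rewrite <- lsum_lin. f_equal. apply functional_extensionality; intro; ring. }
  destruct Hc as [Hc|Hc].
  - split.
    + intros s [l [Hl ->]]. rewrite Hs. apply Rmult_le_compat_l. lra. apply H1. exists l; auto.
    + intros b Hb. assert (e <= b / c).
      { apply H2. intros s [l [Hl ->]]. apply (Rmult_le_reg_l c); auto.
        replace (c * (b/c)) with b by (field; lra). rewrite <- Hs. apply Hb. exists l; auto. }
      apply (Rmult_le_reg_l (/c)). apply Rinv_0_lt_compat; auto.
      replace (/c * (c * e)) with e by (field; lra). lra.
  - subst. split.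
    + intros s [l [Hl ->]]. rewrite Hs. lra.
    + intros b Hb. rewrite Rmult_0_l. apply Hb. exists []. split. apply pos_partition_nil. rewrite Hs. ring.
Qed.

End LowerSums.

Section CommonRefinement.
Variable L : nonneg_law.
Notation F := (Fbar L).

Fixpoint insert_sorted (y : R) (l : list R) : list R :=
  match l with
  | [] => [y]
  | b :: l' => if Rlt_dec b y then b :: insert_sorted y l' else if Req_EM_T b y then l else y :: l
  end.

Lemma insert_sorted_sorted a y l : Sorted Rlt (a :: l) -> a < y -> Sorted Rlt (a :: insert_sorted y l).
Proof.
  revert a. induction l as [|b l IH]; intros a Hs Hay; simpl.
  - repeat constructor. auto.
  - inversion Hs; subst. inversion H2; subst.
    destruct (Rlt_dec b y).
    + constructor. apply IH; auto. constructor. auto.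
    + destruct (Req_EM_T b y). auto.
      constructor. constructor. auto. constructor. lra. constructor. auto.
Qed.

Lemma insert_sorted_In x y l : In x (insert_sorted y l) <-> y = x \/ In x l.
Proof.
  induction l as [|b l IH]; simpl.
  - tauto.
  - destruct (Rlt_dec b y); simpl.
    + rewrite IH. tauto.
    + destruct (Req_EM_T b y); simpl.
      * subst. tauto.
      * tauto.
Qed.

Definition nondec (g : R -> R) := forall u v, 0 <= u -> u <= v -> g u <= g v.

Lemma ltsum_le_insert_sorted g a y l : Sorted Rlt (a :: l) -> 0 <= a -> a < y -> nondec g ->
  ltsum L g a l <= ltsum L g a (insert_sorted y l).
Proof.
  revert a. induction l as [|b l IH]; intros a Hs Ha Hay Hg; simpl.
  - pose proof (Fbar_range L y). pose proof (Hg a y Ha (Rlt_le _ _ Hay)). nra.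
  - inversion Hs; subst. inversion H2; subst.
    destruct (Rlt_dec b y).
    + simpl. pose proof (IH b H1 ltac:(lra) r Hg). lra.
    + destruct (Req_EM_T b y). simpl. lra.
      simpl. assert (y < b) by lra.
      pose proof (Fbar_mono L y b (Rlt_le _ _ H)). pose proof (Hg a y Ha (Rlt_le _ _ Hay)).
      assert (0 <= (g y - g a) * (F y - F b)) by (apply Rmult_le_pos; lra). nra.
Qed.

Fixpoint insert_all (Q l : list R) : list R :=
  match Q with [] => l | q :: Q' => insert_all Q' (insert_sorted q l) end.

Lemma pos_partition_pos l q : pos_partition l -> In q l -> 0 < q.
Proof.
  intros H Hq. unfold pos_partition in H. apply Sorted_StronglySorted in H.
  - inversion H; subst. rewrite Forall_forall in H3. auto.
  - intros x y z; apply Rlt_trans.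
Qed.

Lemma insert_all_pos_partition Q l : pos_partition l -> (forall q, In q Q -> 0 < q) -> pos_partition (insert_all Q l).
Proof.
  revert l. induction Q as [|q Q IH]; intros l Hl HQ; simpl; auto.
  apply IH. apply insert_sorted_sorted; auto. apply HQ; simpl; auto.
  intros; apply HQ; simpl; auto.
Qed.

Lemma insert_all_In x Q l : In x (insert_all Q l) <-> In x Q \/ In x l.
Proof.
  revert l. induction Q as [|q Q IH]; intros l; simpl. tauto.
  rewrite IH, insert_sorted_In. intuition.
Qed.

Lemma lsum_le_insert_all g Q l : pos_partition l -> (forall q, In q Q -> 0 < q) -> nondec g ->
  lsum L g l <= lsum L g (insert_all Q l).
Proof.
  revert l. induction Q as [|q Q IH]; intros l Hl HQ Hg; simpl. lra.
  apply Rle_trans with (lsum L g (insert_sorted q l)).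
  - unfold lsum. pose proof (ltsum_le_insert_sorted g 0 q l Hl (Rle_refl 0) (HQ q (or_introl eq_refl)) Hg). lra.
  - apply IH; auto. apply insert_sorted_sorted; auto. apply HQ; simpl; auto.
    intros; apply HQ; simpl; auto.
Qed.

Lemma strongly_sorted_eq l1 l2 : StronglySorted Rlt l1 -> StronglySorted Rlt l2 ->
  (forall x, In x l1 <-> In x l2) -> l1 = l2.
Proof.
  revert l2. induction l1 as [|a l1 IH]; intros l2 H1 H2 Hx; destruct l2 as [|b l2].
  - auto.
  - exfalso. apply (proj2 (Hx b)). simpl; auto.
  - exfalso. apply (proj1 (Hx a)). simpl; auto.
  - inversion H1; subst. inversion H2; subst. rewrite Forall_forall in H4, H6.
    assert (a = b).
    { destruct (proj1 (Hx a) (or_introl eq_refl)) as [E|E]; auto.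
      destruct (proj2 (Hx b) (or_introl eq_refl)) as [E'|E']; auto.
      pose proof (H6 a E); pose proof (H4 b E'). lra. }
    subst. f_equal. apply IH; auto. intros x. split; intros Hin.
    + destruct (proj1 (Hx x) (or_intror Hin)) as [E|E]; auto. subst. pose proof (H4 x Hin); lra.
    + destruct (proj2 (Hx x) (or_intror Hin)) as [E|E]; auto. subst. pose proof (H6 x Hin); lra.
Qed.

Lemma pos_partition_strongly_sorted l : pos_partition l -> StronglySorted Rlt l.
Proof.
  intros H. unfold pos_partition in H. inversion H; subst. apply Sorted_StronglySorted; auto.
  intros x y z; apply Rlt_trans.
Qed.

Lemma common_refinement l1 l2 : pos_partition l1 -> pos_partition l2 -> exists R, pos_partition R /\
  (forall g, nondec g -> lsum L g l1 <= lsum L g R /\ lsum L g l2 <= lsum L g R).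
Proof.
  intros H1 H2. exists (insert_all l2 l1).
  assert (Ok1 : pos_partition (insert_all l2 l1)) by (apply insert_all_pos_partition; auto; intros q Hq; exact (pos_partition_pos l2 q H2 Hq)).
  assert (Ok2 : pos_partition (insert_all l1 l2)) by (apply insert_all_pos_partition; auto; intros q Hq; exact (pos_partition_pos l1 q H1 Hq)).
  assert (E : insert_all l2 l1 = insert_all l1 l2).
  { apply strongly_sorted_eq; try apply pos_partition_strongly_sorted; auto. intros x. rewrite !insert_all_In. tauto. }
  split; auto. intros g Hg. split.
  - apply lsum_le_insert_all; auto. intros q Hq; exact (pos_partition_pos l2 q H2 Hq).
  - rewrite E. apply lsum_le_insert_all; auto. intros q Hq; exact (pos_partition_pos l1 q H1 Hq).
Qed.

(* [Expect] is a supremum, not a linear functional: additivity for nondecreasing integrands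
   comes from evaluating both lower sums on a common refinement, which only increases them. *)
Lemma Expect_add_le f g h ef eg eh : Expect L f ef -> Expect L g eg -> Expect L h eh ->
  nondec f -> nondec g -> (forall t, 0 <= t -> f t + g t <= h t) -> ef + eg <= eh.
Proof.
  intros Hf Hg Hh Hfn Hgn Hfg.
  assert (K : forall l1 l2, pos_partition l1 -> pos_partition l2 -> lsum L f l1 + lsum L g l2 <= eh).
  { intros l1 l2 O1 O2. destruct (common_refinement l1 l2 O1 O2) as [R [OR HR]].
    destruct (HR f Hfn) as [A _]. destruct (HR g Hgn) as [_ B].
    apply Rle_trans with (lsum L (fun t => 1 * f t + 1 * g t) R).
    - rewrite lsum_lin. lra.
    - apply Rle_trans with (lsum L h R). apply lsum_mono; auto. intros t Ht.
      pose proof (Hfg t Ht). lra. apply lsum_le_Expect; auto. }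
  assert (ef <= eh - eg).
  { apply (Expect_le_of_lsum_le L f ef _ Hf). intros l1 O1.
    assert (eg <= eh - lsum L f l1).
    { apply (Expect_le_of_lsum_le L g eg _ Hg). intros l2 O2. pose proof (K l1 l2 O1 O2). lra. }
    lra. }
  lra.
Qed.

End CommonRefinement.

Section TailBounds.
Variable L : nonneg_law.
Notation F := (Fbar L).

Lemma ltsum_tail g Psi P a l : Sorted Rlt (a :: l) -> 0 <= a ->
  (forall u v, 0 <= u -> u <= v -> (g v - g u) * F v <= Psi v - Psi u) ->
  (forall x, 0 <= x -> Psi x <= P) ->
  ltsum L g a l <= g a * F a + P - Psi a.
Proof.
  revert a. induction l as [|b l IH]; intros a Hs Ha Hc HP; simpl.
  - pose proof (HP a Ha). lra.
  - inversion Hs; subst. inversion H2; subst.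
    pose proof (IH b H1 ltac:(lra) Hc HP). pose proof (Hc a b Ha (Rlt_le _ _ H0)). lra.
Qed.

(* Summation by parts: [E[g(W)] = g 0 + int F dg], so a bounded primitive [Psi] of [F dg]
   controls the expectation. *)
Lemma Expect_le_tail g Psi P e : Expect L g e ->
  (forall u v, 0 <= u -> u <= v -> (g v - g u) * F v <= Psi v - Psi u) ->
  (forall x, 0 <= x -> Psi x <= P) ->
  e <= g 0 + P - Psi 0.
Proof.
  intros He Hc HP. apply (Expect_le_of_lsum_le L g e _ He). intros l Hl. unfold lsum.
  pose proof (ltsum_tail g Psi P 0 l Hl (Rle_refl 0) Hc HP). lra.
Qed.

Lemma lsum_single g r : lsum L g [r] = g 0 * (1 - F r) + g r * F r.
Proof. unfold lsum. simpl. ring. Qed.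

Lemma pos_partition_single r : 0 < r -> pos_partition [r].
Proof. intros. unfold pos_partition. repeat constructor. auto. Qed.

Lemma Expect_ge_point g e r : Expect L g e -> 0 < r -> 0 <= g 0 -> g r * F r <= e.
Proof.
  intros He Hr Hg0. pose proof (lsum_le_Expect L g e [r] He (pos_partition_single r Hr)).
  rewrite lsum_single in H. pose proof (Fbar_range L r). nra.
Qed.

Fixpoint abel_sum (g : R -> R) (a : R) (l : list R) : R :=
  match l with [] => 0 | b :: l' => (g b - g a) * F b + abel_sum g b l' end.

Lemma ltsum_abel_sum g a l : ltsum L g a l = g a * F a + abel_sum g a l.
Proof. revert a; induction l; intros; simpl; [ring| rewrite IHl; ring]. Qed.

Lemma lsum_abel_sum g l : lsum L g l = g 0 + abel_sum g 0 l.
Proof. unfold lsum. rewrite ltsum_abel_sum. ring. Qed.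

Lemma ltsum_vanish g a l : (forall t, 0 <= t -> F t = 0) -> Sorted Rlt (a :: l) -> 0 <= a ->
  ltsum L g a l = 0.
Proof.
  revert a; induction l as [|b l IH]; intros a H0 Hs Ha; simpl.
  - rewrite H0; auto; ring.
  - inversion Hs; subst. inversion H3; subst. rewrite IH; auto; [|lra].
    rewrite !H0; [ring|lra|lra].
Qed.

Lemma exists_Fbar_pos EW : Expect L (fun t => t) EW -> 0 < EW -> exists r, 0 < r /\ 0 < F r.
Proof.
  intros HE Hpos. apply NNPP. intros Hn.
  assert (Hz : forall t, 0 < t -> F t = 0).
  { intros t Ht. pose proof (Fbar_range L t). destruct (Rle_lt_or_eq_dec 0 (F t) (proj1 H)); auto.
    exfalso. apply Hn. exists t; auto. }
  assert (H0 : F 0 = 0).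
  { pose proof (Fbar_range L 0). apply Rle_antisym; [|tauto]. apply Rnot_lt_le. intro Hlt.
    destruct (Fbar_rcont L 0 (F 0) Hlt) as [d [Hd Hd2]].
    pose proof (Hd2 (d/2) ltac:(lra)). rewrite (Hz (d/2)) in H0 by lra. lra. }
  assert (Hall : forall t, 0 <= t -> F t = 0).
  { intros t Ht. destruct (Rle_lt_or_eq_dec 0 t Ht); [apply Hz; auto| subst; auto]. }
  assert (EW <= 0).
  { apply (Expect_le_of_lsum_le L _ EW 0 HE). intros l Hl. unfold lsum. rewrite ltsum_vanish; auto. lra. lra. }
  lra.
Qed.

Lemma Expect_clamp_le_tail (c phi psi : R -> R) A P e :
  (forall x y, x <= y -> c x <= c y) -> (forall x, A <= c x) -> (forall x, A < c x -> c x <= x) ->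
  0 <= A ->
  (forall u v, A <= u -> u <= v -> phi u <= phi v) ->
  (forall u v, A <= u -> u < v -> (phi v - phi u) * F v <= psi v - psi u) ->
  (forall x, 0 <= x -> psi (c x) <= P) ->
  Expect L (fun x => phi (c x) - phi (c 0)) e -> e <= P - psi (c 0).
Proof.
  intros Hc1 Hc2 Hc3 HA Hphi Hpsi HP He.
  pose proof (Expect_le_tail _ (fun x => psi (c x)) P e He) as K.
  replace (P - psi (c 0)) with ((phi (c 0) - phi (c 0)) + P - psi (c 0)) by ring.
  apply K; auto.
  intros u v Hu Huv. pose proof (Hc1 u v Huv).
  destruct (Rle_lt_or_eq_dec _ _ H) as [Hlt|Heq].
  - assert (c v <= v) by (apply Hc3; pose proof (Hc2 u); lra).
    pose proof (Fbar_mono L (c v) v H0). pose proof (Fbar_range L v).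
    pose proof (Hphi (c u) (c v) (Hc2 u) (Rlt_le _ _ Hlt)).
    pose proof (Hpsi (c u) (c v) (Hc2 u) Hlt).
    assert ((phi (c v) - phi (c u)) * F v <= (phi (c v) - phi (c u)) * F (c v)) by nra.
    lra.
  - rewrite Heq. lra.
Qed.

End TailBounds.

Section LinearBounds.
Variable L : nonneg_law.

Lemma Expect_le_scale f g ef eg c : Expect L f ef -> Expect L g eg -> 0 <= c ->
  (forall t, 0 <= t -> f t <= c * g t) -> ef <= c * eg.
Proof.
  intros Hf Hg Hc H. pose proof (Expect_le_lin2 L f g g ef eg eg c 0 Hf Hg Hg Hc (Rle_refl 0)).
  replace (c * eg) with (c * eg + 0 * eg) by ring. apply H0. intros t Ht. rewrite Rmult_0_l, Rplus_0_r. auto.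
Qed.

Lemma Expect_le_lin3 f g1 g2 g3 ef e1 e2 e3 c1 c2 c3 : Expect L f ef -> Expect L g1 e1 -> Expect L g2 e2 ->
  Expect L g3 e3 -> 0 <= c1 -> 0 <= c2 -> 0 <= c3 ->
  (forall t, 0 <= t -> f t <= c1 * g1 t + c2 * g2 t + c3 * g3 t) ->
  ef <= c1 * e1 + c2 * e2 + c3 * e3.
Proof.
  intros Hf H1 H2 H3 Hc1 Hc2 Hc3 Hfg. apply (Expect_le_of_lsum_le L f ef _ Hf). intros l Hl.
  apply Rle_trans with (lsum L (fun t => 1 * (fun t => c1 * g1 t + c2 * g2 t) t + c3 * g3 t) l).
  apply lsum_mono; auto. intros t Ht; simpl; rewrite Rmult_1_l; auto.
  rewrite lsum_lin. rewrite (lsum_lin L c1 c2 g1 g2).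
  pose proof (lsum_le_Expect L _ _ l H1 Hl). pose proof (lsum_le_Expect L _ _ l H2 Hl). pose proof (lsum_le_Expect L _ _ l H3 Hl).
  assert (c1 * lsum L g1 l <= c1 * e1) by (apply Rmult_le_compat_l; auto).
  assert (c2 * lsum L g2 l <= c2 * e2) by (apply Rmult_le_compat_l; auto).
  assert (c3 * lsum L g3 l <= c3 * e3) by (apply Rmult_le_compat_l; auto).
  lra.
Qed.

End LinearBounds.

Definition deficit (a B z t : R) := ((a * t * z + B) - tanh (a * t * z + B)) * (a * t).
Definition cubic_deficit (a z t : R) := (a * t * z - tanh (a * t * z)) * (a * t).

Lemma nondec_mul (f g : R -> R) : nondec f -> nondec g -> (forall t, 0 <= t -> 0 <= f t) ->
  (forall t, 0 <= t -> 0 <= g t) -> nondec (fun t => f t * g t).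
Proof.
  intros Hf Hg Hf0 Hg0 u v Hu Huv. pose proof (Hf u v Hu Huv). pose proof (Hg u v Hu Huv).
  pose proof (Hf0 u Hu). pose proof (Hg0 u Hu). nra.
Qed.

Lemma affine_le_compat a z B u v : 0 <= a -> 0 <= z -> u <= v -> a*u*z + B <= a*v*z + B.
Proof. intros. assert (0 <= a*z*(v-u)) by (apply Rmult_le_pos; [apply Rmult_le_pos|]; lra). nra. Qed.

Lemma affine_nonneg a z B t : 0 <= a -> 0 <= z -> 0 <= t -> 0 <= B -> 0 <= a*t*z + B.
Proof. intros. assert (0 <= a*t*z) by (repeat apply Rmult_le_pos; lra). lra. Qed.

Lemma mul3_nonneg a t z : 0 <= a -> 0 <= t -> 0 <= z -> 0 <= a*t*z.
Proof. intros. repeat apply Rmult_le_pos; lra. Qed.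

Section FixedPoint.
Variable L : nonneg_law.
Notation F := (Fbar L).
Variables EW EW2 : R.
Hypothesis HEW : Expect L (fun t => t) EW.
Hypothesis HEW2 : Expect L (fun t => t^2) EW2.
Variables a B z : R.
Hypothesis Ha : 0 < a.
Hypothesis HB : 0 < B.
Hypothesis Hz : 0 < z.
Hypothesis Hfix : Expect L (fun t => tanh (a * t * z + B) * (a * t)) z.

Lemma fixed_point_integrand_nondec : nondec (fun t => tanh (a * t * z + B) * (a * t)).
Proof.
  apply nondec_mul.
  - intros u v Hu Huv. apply tanh_le_compat. apply affine_le_compat; lra.
  - intros u v Hu Huv. nra.
  - intros t Ht. apply tanh_nonneg. apply affine_nonneg; lra.
  - intros t Ht. nra.
Qed.

Lemma deficit_nondec : nondec (deficit a B z).
Proof.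
  unfold deficit. apply nondec_mul.
  - intros u v Hu Huv. apply sub_tanh_le_compat. apply affine_le_compat; lra.
  - intros u v Hu Huv. nra.
  - intros t Ht. apply sub_tanh_nonneg. apply affine_nonneg; lra.
  - intros t Ht. nra.
Qed.

Lemma Expect_scaled_id : Expect L (fun t => a * t) (a * EW).
Proof. apply Expect_scale; auto; lra. Qed.

Lemma fixed_point_le : z <= a * EW.
Proof.
  apply (Expect_le L _ _ _ _ Hfix Expect_scaled_id). intros t Ht. pose proof (tanh_lt_1 (a*t*z+B)).
  assert (0 <= a * t) by nra. nra.
Qed.

Lemma lsum_deficit_le l : pos_partition l ->
  lsum L (deficit a B z) l <= (a^2*EW2 - 1)*z + a*B*EW.
Proof.
  intros Hy.
  set (D := deficit a B z).
  set (lin := fun t => (a^2 * z) * t^2 + (a * B) * t).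
  assert (Hlin : exists e, Expect L lin e).
  { apply (Expect_exists_of_bounded L lin (a^2*z*EW2 + a*B*EW)). intros l0 Hl. unfold lin. rewrite lsum_lin.
    pose proof (lsum_le_Expect L _ _ l0 HEW2 Hl). pose proof (lsum_le_Expect L _ _ l0 HEW Hl).
    assert (0 <= a^2*z) by (apply Rmult_le_pos; [apply pow_le|]; lra).
    apply Rplus_le_compat; apply Rmult_le_compat_l; auto; nra. }
  destruct Hlin as [el Hel].
  assert (Hel2 : el <= a^2*z*EW2 + a*B*EW).
  { apply (Expect_le_lin2 L lin _ _ el EW2 EW _ _ Hel HEW2 HEW).
    apply Rmult_le_pos; [apply pow_le|]; lra. nra. intros; unfold lin; lra. }
  assert (HDe : exists e, Expect L D e).
  { apply (Expect_exists_of_dominated L D lin el Hel). intros t Ht. unfold D, lin, deficit.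
    pose proof (tanh_nonneg (a*t*z+B) (affine_nonneg a z B t ltac:(lra) ltac:(lra) Ht ltac:(lra))). assert (0 <= a*t) by nra. nra. }
  destruct HDe as [eD HeD].
  assert (Hsup : z + eD <= el).
  { apply (Expect_add_le L _ _ _ z eD el Hfix HeD Hel fixed_point_integrand_nondec deficit_nondec).
    intros t Ht. unfold D, lin, deficit. simpl. lra. }
  assert (HDp : lsum L D l <= eD) by (apply lsum_le_Expect; auto).
  assert (a^2*z*EW2 = (a^2*EW2)*z) by ring. lra.
Qed.

Lemma deficit_point_le y : 0 < y ->
  ((a*y*z+B) - tanh (a*y*z+B)) * (a*y) * F y <= (a^2*EW2 - 1)*z + a*B*EW.
Proof.
  intros Hy. pose proof (lsum_deficit_le [y] (pos_partition_single y Hy)). rewrite lsum_single in H. unfold deficit in H.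
  replace (a * 0 * z + B) with B in H by ring. rewrite Rmult_0_r, Rmult_0_r, Rmult_0_l, Rplus_0_l in H.
  exact H.
Qed.

Lemma cubic_deficit_Expect_exists : exists eH, Expect L (cubic_deficit a z) eH.
Proof.
  apply (Expect_exists_of_dominated L _ (fun t => (a^2 * z) * t^2) ((a^2*z) * EW2)).
  apply Expect_scale; auto. apply Rmult_le_pos; [apply pow_le|]; lra.
  intros t Ht. unfold cubic_deficit.
  pose proof (tanh_nonneg (a*t*z) (mul3_nonneg a t z ltac:(lra) Ht ltac:(lra))).
  assert (0 <= a*t) by nra. nra.
Qed.

Lemma fixed_point_ge eH : Expect L (cubic_deficit a z) eH ->
  (1 - tanh B) * (a^2 * EW2 * z - eH) + tanh B * (a * EW) <= z.
Proof.
  intros HeH.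
  set (T := fun t => tanh (a * t * z) * (a * t)).
  assert (HT : exists e, Expect L T e).
  { apply (Expect_exists_of_dominated L _ (fun t => (a^2 * z) * t^2) ((a^2*z) * EW2)).
    apply Expect_scale; auto. apply Rmult_le_pos; [apply pow_le|]; lra.
    intros t Ht. unfold T. pose proof (tanh_le_id (a*t*z) (mul3_nonneg a t z ltac:(lra) Ht ltac:(lra))). pose proof (tanh_nonneg (a*t*z) (mul3_nonneg a t z ltac:(lra) Ht ltac:(lra))).
    assert (0 <= a*t) by nra. nra. }
  destruct HT as [eT HeT].
  assert (H1 : (a^2*z) * EW2 <= 1 * eT + 1 * eH).
  { apply (Expect_le_lin2 L (fun t => (a^2 * z) * t^2) T (cubic_deficit a z) ((a^2*z)*EW2) eT eH 1 1); auto.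
    apply Expect_scale; auto. apply Rmult_le_pos; [apply pow_le|]; lra. lra. lra.
    intros t Ht. unfold T, cubic_deficit. lra. }
  pose proof (tanh_nonneg B (Rlt_le _ _ HB)). pose proof (tanh_lt_1 B).
  assert (H2 : (1 - tanh B) * eT + tanh B * (a * EW) <= z).
  { apply (Expect_add_le L (fun t => (1 - tanh B) * T t) (fun t => tanh B * (a * t))
       (fun t => tanh (a*t*z+B)*(a*t)) ((1 - tanh B)*eT) (tanh B * (a*EW)) z (Expect_scale L T eT (1 - tanh B) HeT ltac:(lra))).
    - replace (fun t => tanh B * (a * t)) with (fun t => tanh B * ((fun t => a * t) t)) by reflexivity.
      apply Expect_scale. apply Expect_scaled_id. lra.
    - exact Hfix.
    - assert (HTn : nondec T).
      { unfold T. apply nondec_mul; auto. intros x y Hx Hxy. apply tanh_le_compat. pose proof (affine_le_compat a z 0 x y ltac:(lra) ltac:(lra) Hxy). lra.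
      intros x y Hx Hxy; nra. intros; apply tanh_nonneg; apply mul3_nonneg; lra. intros; nra. }
      intros u v Hu Huv. pose proof (HTn u v Hu Huv). apply Rmult_le_compat_l; lra.
    - intros u v Hu Huv. pose proof (tanh_nonneg B (Rlt_le _ _ HB)). cbv beta.
      apply Rmult_le_compat_l; [lra|]. apply Rmult_le_compat_l; lra.
    - intros t Ht. unfold T. pose proof (tanh_add_ge (a*t*z) B (mul3_nonneg a t z ltac:(lra) Ht ltac:(lra)) ltac:(lra)).
      assert (0 <= a*t) by nra. nra. }
  nra.
Qed.

Lemma magnetization_le m : Expect L (fun t => tanh (a * t * z + B)) m -> m <= a * z * EW + B.
Proof.
  intros Hm. replace (a * z * EW + B) with (a * z * EW + B * 1) by ring.
  apply (Expect_le_lin2 L _ (fun t => t) (fun _ => 1) m EW 1 (a*z) B Hm HEW (Expect_const L 1)).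
  nra. lra. intros t Ht. pose proof (tanh_le_id (a*t*z+B) (affine_nonneg a z B t ltac:(lra) ltac:(lra) Ht ltac:(lra))). lra.
Qed.

Lemma magnetization_ge m r : Expect L (fun t => tanh (a * t * z + B)) m -> 0 < r ->
  tanh B <= m /\ tanh (a * r * z) * F r <= m.
Proof.
  intros Hm Hr. pose proof (lsum_le_Expect L _ m [r] Hm (pos_partition_single r Hr)). rewrite lsum_single in H.
  pose proof (Fbar_range L r).
  pose proof (mul3_nonneg a r z ltac:(lra) ltac:(lra) ltac:(lra)).
  assert (tanh B <= tanh (a*r*z+B)) by (apply tanh_le_compat; lra).
  assert (tanh (a*r*z) <= tanh (a*r*z+B)) by (apply tanh_le_compat; lra).
  replace (a * 0 * z + B) with B in H by ring.
  pose proof (tanh_nonneg B ltac:(lra)). pose proof (tanh_nonneg (a*r*z) ltac:(lra)).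
  split; nra.
Qed.

End FixedPoint.

Section PowerLawTail.
Variable L : nonneg_law.
Notation F := (Fbar L).

Variables tau CW w0 : R.
Hypothesis Hw0 : 1 < w0.
Hypothesis HCW : 0 < CW.
Hypothesis Htau : 3 < tau <= 5.
Hypothesis HPL : forall x, w0 < x -> F x <= CW * Rpower x (- (tau - 1)).

Lemma Expect_tail_sq_le M e : w0 < M -> Expect L (fun t => Rmax t M ^ 2 - M ^ 2) e ->
  e <= CW * (2 / (tau - 3)) * Rpower M (3 - tau).
Proof.
  intros HM He.
  pose proof (Expect_clamp_le_tail L (fun t => Rmax t M) (fun t => t^2)
     (fun t => CW * (INR 2 / (INR 2 + 1 - tau)) * Rpower t (INR 2 + 1 - tau)) M 0 e) as K.
  assert (Rmax 0 M = M) by (apply Rmax_right; lra).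
  assert (E2 : INR 2 + 1 - tau = 3 - tau) by (simpl; ring).
  cbv beta in K. rewrite H, E2 in K.
  replace (CW * (2 / (tau - 3)) * Rpower M (3 - tau)) with (0 - CW * (INR 2 / (3 - tau)) * Rpower M (3 - tau))
    by (simpl; field; lra).
  apply K; clear K.
  - intros x y Hxy. apply Rle_max_compat_r; auto.
  - intros x. apply Rmax_r.
  - intros x Hx. unfold Rmax in *. destruct (Rle_dec x M); lra.
  - lra.
  - intros u v Hu Huv. apply pow_incr. lra.
  - intros u v Hu Huv. pose proof (HPL v ltac:(lra)).
    pose proof (pow_increment_tail_le 2 tau u v ltac:(lra) Huv ltac:(lia) ltac:(simpl; lra) ltac:(lra)) as P.
    rewrite E2 in P. replace (1 - tau) with (- (tau - 1)) in P by ring.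
    assert (0 <= v^2 - u^2) by (assert (u^2 <= v^2) by (apply pow_incr; lra); lra).
    pose proof (Fbar_range L v).
    assert ((v^2 - u^2) * F v <= (v^2 - u^2) * (CW * Rpower v (- (tau - 1)))) by (apply Rmult_le_compat_l; lra).
    replace (CW * (INR 2 / (3 - tau)) * Rpower v (3 - tau) - CW * (INR 2 / (3 - tau)) * Rpower u (3 - tau))
      with (CW * (INR 2 / (3 - tau) * (Rpower v (3 - tau) - Rpower u (3 - tau)))) by ring.
    assert (CW * ((v ^ 2 - u ^ 2) * Rpower v (- (tau - 1))) <= CW * (INR 2 / (3 - tau) * (Rpower v (3 - tau) - Rpower u (3 - tau))))
      by (apply Rmult_le_compat_l; lra).
    lra.
  - intros x Hx. assert (INR 2 / (3 - tau) < 0).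
    { simpl. unfold Rdiv. replace (1+1) with 2 by ring.
      assert (/ (3 - tau) < 0) by (apply Rinv_lt_0_compat; lra). nra. }
    hnf.
    pose proof (Rpower_pos (Rmax x M) (3 - tau)). 
    assert (0 < CW * (- (INR 2 / (3 - tau)))) by (apply Rmult_lt_0_compat; lra). nra.
  - exact He.
Qed.

Definition clamp (A M t : R) := Rmin (Rmax t A) M.

Lemma clamp_props A M : A <= M ->
  (forall x y, x <= y -> clamp A M x <= clamp A M y) /\ (forall x, A <= clamp A M x) /\ (forall x, A < clamp A M x -> clamp A M x <= x) /\ (forall x, clamp A M x <= M).
Proof.
  intros HAM. unfold clamp, Rmin, Rmax. repeat split.
  - intros x y Hxy. destruct (Rle_dec x A), (Rle_dec y A), (Rle_dec A M), (Rle_dec x M), (Rle_dec y M); lra.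
  - intros x. destruct (Rle_dec x A), (Rle_dec A M), (Rle_dec x M); lra.
  - intros x. destruct (Rle_dec x A), (Rle_dec A M), (Rle_dec x M); lra.
  - intros x. destruct (Rle_dec x A), (Rle_dec A M), (Rle_dec x M); lra.
Qed.

Lemma clamp_0 A M : 0 <= A -> A <= M -> clamp A M 0 = A.
Proof. intros. unfold clamp, Rmin, Rmax. destruct (Rle_dec 0 A), (Rle_dec A M); lra. Qed.

Lemma Expect_clamp_pow4_le A0 M e : w0 < A0 -> A0 <= M -> tau < 5 ->
  Expect L (fun t => clamp A0 M t ^ 4 - A0 ^ 4) e ->
  e <= CW * (4 / (5 - tau)) * Rpower M (5 - tau).
Proof.
  intros HA HAM Ht5 He.
  destruct (clamp_props A0 M HAM) as [C1 [C2 [C3 C4]]].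
  assert (E4 : INR 4 + 1 - tau = 5 - tau) by (simpl; ring).
  pose proof (Expect_clamp_le_tail L (clamp A0 M) (fun t => t^4)
     (fun t => CW * (INR 4 / (INR 4 + 1 - tau)) * Rpower t (INR 4 + 1 - tau)) A0
     (CW * (4 / (5 - tau)) * Rpower M (5 - tau)) e C1 C2 C3 ltac:(lra)) as K.
  cbv beta in K. rewrite clamp_0 in K by lra. rewrite E4 in K.
  assert (0 < CW * (INR 4 / (5 - tau)) * Rpower A0 (5 - tau)).
  { apply Rmult_lt_0_compat. apply Rmult_lt_0_compat; auto. simpl. apply Rdiv_lt_0_compat; lra.
    apply Rpower_pos. }
  enough (e <= CW * (4 / (5 - tau)) * Rpower M (5 - tau) - CW * (INR 4 / (5 - tau)) * Rpower A0 (5 - tau)) by lra.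
  apply K; clear K.
  - intros u v Hu Huv. apply pow_incr. lra.
  - intros u v Hu Huv. pose proof (HPL v ltac:(lra)).
    pose proof (pow_increment_tail_le 4 tau u v ltac:(lra) Huv ltac:(lia) ltac:(simpl; lra) ltac:(lra)) as P.
    rewrite E4 in P. replace (1 - tau) with (- (tau - 1)) in P by ring.
    assert (0 <= v^4 - u^4) by (assert (u^4 <= v^4) by (apply pow_incr; lra); lra).
    pose proof (Fbar_range L v).
    assert ((v^4 - u^4) * F v <= (v^4 - u^4) * (CW * Rpower v (- (tau - 1)))) by (apply Rmult_le_compat_l; lra).
    assert (CW * ((v ^ 4 - u ^ 4) * Rpower v (- (tau - 1))) <= CW * (INR 4 / (5 - tau) * (Rpower v (5 - tau) - Rpower u (5 - tau))))
      by (apply Rmult_le_compat_l; lra).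
    nra.
  - intros x Hx. replace (INR 4) with 4 by (simpl; ring).
    apply Rmult_le_compat_l. apply Rmult_le_pos. lra. apply Rlt_le, Rdiv_lt_0_compat; lra.
    apply Rle_Rpower_l; [lra| split; [pose proof (C2 x); lra| apply C4]].
  - exact He.
Qed.

Lemma Expect_clamp_pow4_le_ln A0 M e : w0 < A0 -> A0 <= M -> tau = 5 ->
  Expect L (fun t => clamp A0 M t ^ 4 - A0 ^ 4) e ->
  e <= 4 * CW * (ln M - ln A0).
Proof.
  intros HA HAM Ht5 He. subst tau.
  destruct (clamp_props A0 M HAM) as [C1 [C2 [C3 C4]]].
  pose proof (Expect_clamp_le_tail L (clamp A0 M) (fun t => t^4)
     (fun t => 4 * CW * ln t) A0 (4 * CW * ln M) e C1 C2 C3 ltac:(lra)) as K.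
  cbv beta in K. rewrite clamp_0 in K by lra.
  replace (4 * CW * (ln M - ln A0)) with (4 * CW * ln M - 4 * CW * ln A0) by ring.
  apply K; clear K.
  - intros u v Hu Huv. apply pow_incr. lra.
  - intros u v Hu Huv. pose proof (HPL v ltac:(lra)).
    pose proof (pow4_increment_tail_le_ln u v ltac:(lra) Huv) as P.
    assert (0 <= v^4 - u^4) by (assert (u^4 <= v^4) by (apply pow_incr; lra); lra).
    pose proof (Fbar_range L v).
    assert ((v^4 - u^4) * F v <= (v^4 - u^4) * (CW * Rpower v (- (5 - 1)))) by (apply Rmult_le_compat_l; lra).
    assert (CW * ((v ^ 4 - u ^ 4) * Rpower v (- (5 - 1))) <= CW * (4 * (ln v - ln u)))
      by (apply Rmult_le_compat_l; lra).
    nra.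
  - intros x Hx. apply Rmult_le_compat_l. lra. apply ln_le. pose proof (C2 x); lra. apply C4.
  - exact He.
Qed.

End PowerLawTail.

Section CubicDeficit.
Variable L : nonneg_law.
Variable EW2 : R.
Hypothesis HEW2 : Expect L (fun t => t^2) EW2.
Variables a z A0 : R.
Hypothesis Ha : 0 < a.
Hypothesis Hz : 0 < z.
Hypothesis HA0 : 0 < A0.
Hypothesis HA0M : A0 <= / (a * z).

Let M := / (a * z).

Let a_M_z : a * M * z = 1.
Proof. unfold M. field. lra. Qed.

Lemma cubic_deficit_le_below t : 0 <= t <= M -> cubic_deficit a z t <= a^4 * z^3 * t^4.
Proof.
  intros Ht. unfold cubic_deficit.
  assert (Hu0 : 0 <= a * t * z) by (apply mul3_nonneg; lra).
  pose proof (tanh_ge_cubic (a*t*z) Hu0).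
  assert (0 <= a * t) by nra.
  assert ((a*t*z - tanh (a*t*z)) * (a*t) <= ((a*t*z)^3/3) * (a*t)) by (apply Rmult_le_compat_r; lra).
  replace (((a*t*z)^3/3) * (a*t)) with (a^4 * z^3 * t^4 / 3) in * by field.
  assert (0 <= a^4 * z^3 * t^4)
    by (pose proof (pow_le t 4 (proj1 Ht)); repeat apply Rmult_le_pos; try apply pow_le; lra).
  lra.
Qed.

Lemma cubic_deficit_le_above t : 0 <= t -> cubic_deficit a z t <= a^2 * z * t^2.
Proof.
  intros Ht. unfold cubic_deficit.
  pose proof (tanh_nonneg (a*t*z) (mul3_nonneg a t z ltac:(lra) Ht ltac:(lra))).
  assert (0 <= a * t) by nra.
  assert ((a*t*z - tanh (a*t*z)) * (a*t) <= (a*t*z) * (a*t)) by (apply Rmult_le_compat_r; lra).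
  replace ((a*t*z) * (a*t)) with (a^2 * z * t^2) in * by ring. lra.
Qed.

(* Below the scale [M = 1/(a z)] the cubic Taylor bound applies, above it the linear one;
   the two agree at [M] because [a M z = 1]. *)
Lemma cubic_deficit_le_split t : 0 <= t ->
  cubic_deficit a z t <= a^4 * z^3 * A0^4 * 1 + a^4 * z^3 * (clamp A0 M t ^ 4 - A0 ^ 4)
                          + a^2 * z * (Rmax t M ^ 2 - M ^ 2).
Proof.
  intros Ht.
  assert (P : 0 <= a^4 * z^3) by (apply Rmult_le_pos; apply pow_le; lra).
  destruct (Rle_dec t M) as [Htm|Htm].
  - assert (Hc : t <= clamp A0 M t).
    { unfold clamp, Rmin, Rmax. destruct (Rle_dec t A0), (Rle_dec A0 M), (Rle_dec t M); lra. }
    rewrite (Rmax_right t M) by lra.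
    pose proof (cubic_deficit_le_below t ltac:(lra)).
    assert (a^4 * z^3 * t^4 <= a^4 * z^3 * clamp A0 M t ^ 4)
      by (apply Rmult_le_compat_l; [|apply pow_incr]; lra).
    lra.
  - assert (Hc : clamp A0 M t = M).
    { unfold clamp, Rmin, Rmax. destruct (Rle_dec t A0), (Rle_dec A0 M), (Rle_dec t M); lra. }
    rewrite Hc, (Rmax_left t M) by lra.
    pose proof (cubic_deficit_le_above t Ht).
    assert (E2 : a^4 * z^3 * M^4 = a^2 * z * M^2).
    { replace (a^4 * z^3 * M^4) with ((a * M * z)^2 * (a^2 * z * M^2)) by ring.
      rewrite a_M_z. ring. }
    assert (a ^ 4 * z ^ 3 * A0 ^ 4 * 1 + a ^ 4 * z ^ 3 * (M ^ 4 - A0 ^ 4)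
              + a ^ 2 * z * (t ^ 2 - M ^ 2) = a^2 * z * t^2) by nra.
    lra.
Qed.

Lemma cubic_deficit_split eH : Expect L (cubic_deficit a z) eH ->
  exists ek1 ek2, Expect L (fun t => clamp A0 M t ^ 4 - A0 ^ 4) ek1 /\
    Expect L (fun t => Rmax t M ^ 2 - M ^ 2) ek2 /\
    eH <= a^4 * z^3 * A0^4 + a^4 * z^3 * ek1 + a^2 * z * ek2.
Proof.
  intros HeH.
  assert (HM : 0 < M) by (unfold M; apply Rinv_0_lt_compat; nra).
  destruct (clamp_props A0 M HA0M) as [C1 [C2 [C3 C4]]].
  destruct (Expect_exists_of_dominated L (fun t => clamp A0 M t ^ 4 - A0 ^ 4) (fun _ => M^4) (M^4)
    (Expect_const L _)) as [ek1 Hk1].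
  { intros t Ht. pose proof (C4 t). pose proof (C2 t).
    assert (clamp A0 M t ^4 <= M^4) by (apply pow_incr; lra). pose proof (pow_le A0 4 ltac:(lra)). lra. }
  destruct (Expect_exists_of_dominated L (fun t => Rmax t M ^ 2 - M ^ 2) (fun t => t^2) EW2 HEW2)
    as [ek2 Hk2].
  { intros t Ht. pose proof (pow2_ge_0 t); pose proof (pow2_ge_0 M).
    unfold Rmax. destruct (Rle_dec t M); lra. }
  exists ek1, ek2. split; auto. split; auto.
  replace (a^4 * z^3 * A0^4 + a^4 * z^3 * ek1 + a^2 * z * ek2) with
    (a^4 * z^3 * A0^4 * 1 + a^4 * z^3 * ek1 + a^2 * z * ek2) by ring.
  pose proof (pow_le a 4 ltac:(lra)). pose proof (pow_le z 3 ltac:(lra)).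
  pose proof (pow_le A0 4 ltac:(lra)). pose proof (pow_le a 2 ltac:(lra)).
  apply (Expect_le_lin3 L _ (fun _ => 1) _ _ eH 1 ek1 ek2 (a^4 * z^3 * A0^4) (a^4 * z^3) (a^2 * z)
    HeH (Expect_const L 1) Hk1 Hk2); try (repeat apply Rmult_le_pos; lra).
  exact cubic_deficit_le_split.
Qed.

End CubicDeficit.

Lemma exists_dyadic_count X : 1 <= X -> exists n : nat, 2 ^ n <= X /\ ln X / ln 2 <= INR (S n).
Proof.
  intros HX. pose proof ln_lt_2 as Hl2.
  set (r := ln X / ln 2).
  assert (Hr : 0 <= r).
  { unfold r. apply Rmult_le_pos. destruct (Req_dec X 1). subst; rewrite ln_1; lra.
    left; rewrite <- ln_1; apply ln_increasing; lra. left; apply Rinv_0_lt_compat; lra. }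
  destruct (archimed r) as [A1 A2].
  assert (Hk : (1 <= up r)%Z).
  { assert (0 < IZR (up r)) by lra. apply lt_IZR in H. lia. }
  exists (Z.to_nat (up r - 1)).
  assert (E : INR (Z.to_nat (up r - 1)) = IZR (up r) - 1).
  { rewrite INR_IZR_INZ, Z2Nat.id by lia. rewrite minus_IZR. simpl. ring. }
  split.
  - rewrite <- Rpower_pow by lra. rewrite E. unfold Rpower.
    rewrite <- (exp_ln X) by lra. apply exp_le.
    assert (IZR (up r) - 1 <= r) by lra.
    assert (Er : r * ln 2 = ln X) by (unfold r; field; apply Rgt_not_eq; lra).
    apply (Rmult_le_compat_r (ln 2)) in H; [|lra]. lra.
  - rewrite S_INR, E. lra.
Qed.

Section DyadicScales.
Variable L : nonneg_law.
Notation F := (Fbar L).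
Variables cW w0 : R.
Hypothesis HcW : 0 < cW.
Hypothesis HLT : forall x, w0 < x -> cW * Rpower x (- (5 - 1)) <= F x.
Variables a B z A0 : R.
Hypothesis Ha : 0 < a.
Hypothesis HB : 0 < B.
Hypothesis Hz : 0 < z.
Hypothesis HA0 : w0 < A0.
Hypothesis HA0p : 0 < A0.

Let D := deficit a B z.

Lemma deficit_double y : 0 <= y -> 2 * D y <= D (2 * y).
Proof.
  intros Hy. unfold D, deficit, deficit.
  pose proof (sub_tanh_le_compat (a*y*z+B) (a*(2*y)*z+B) (affine_le_compat a z B y (2*y) ltac:(lra) ltac:(lra) ltac:(lra))).
  pose proof (sub_tanh_nonneg (a*y*z+B) (affine_nonneg a z B y ltac:(lra) ltac:(lra) Hy ltac:(lra))).
  assert (0 <= a*y) by nra. nra.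
Qed.

Lemma deficit_ge_cubic y : 0 <= y -> a * y * z <= 1 -> 4/27 * (a*y*z)^3 * (a*y) <= D y.
Proof.
  intros Hy H1. unfold D, deficit. pose proof (mul3_nonneg a y z ltac:(lra) Hy ltac:(lra)).
  pose proof (sub_tanh_ge_cubic (a*y*z) ltac:(lra)).
  pose proof (sub_tanh_le_compat (a*y*z) (a*y*z+B) ltac:(lra)).
  assert (0 <= a*y) by nra. nra.
Qed.

Lemma Rpower_neg4 x : 0 < x -> Rpower x (- (5 - 1)) = / x^4.
Proof. intros. rewrite Rpower_Ropp. replace (5-1) with (INR 4) by (simpl; ring). rewrite Rpower_pow; auto. Qed.

Let c := cW * a^4 * z^3 / 108.

Lemma dyadic_term_first : a * A0 * z <= 1 -> c <= (D A0 - D 0) * F A0.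
Proof.
  intros H. assert (D 0 = 0) by (unfold D, deficit; ring). rewrite H0, Rminus_0_r.
  pose proof (deficit_ge_cubic A0 ltac:(lra) H). pose proof (HLT A0 HA0). rewrite Rpower_neg4 in H2 by lra.
  assert (0 <= 4/27 * (a*A0*z)^3 * (a*A0)).
  { pose proof (mul3_nonneg a A0 z ltac:(lra) ltac:(lra) ltac:(lra)). apply Rmult_le_pos. apply Rmult_le_pos. lra.
    apply pow_le; lra. nra. }
  apply Rle_trans with (4/27 * (a*A0*z)^3 * (a*A0) * (cW * / A0^4)).
  - unfold c. replace (4/27 * (a*A0*z)^3 * (a*A0) * (cW * / A0^4)) with (cW * a^4 * z^3 * (4/27))
      by (field; lra).
    pose proof (pow_le a 4 ltac:(lra)). pose proof (pow_le z 3 ltac:(lra)).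
    assert (0 <= cW * a^4 * z^3) by (repeat apply Rmult_le_pos; lra). lra.
  - apply Rmult_le_compat; auto. pose proof (pow_lt A0 4 HA0p).
    apply Rmult_le_pos. lra. left; apply Rinv_0_lt_compat; auto.
Qed.

Lemma dyadic_term y : w0 < y -> 0 < y -> a * y * z <= 1 -> c <= (D (2*y) - D y) * F (2*y).
Proof.
  intros Hw Hy H. pose proof (deficit_double y ltac:(lra)). pose proof (deficit_ge_cubic y ltac:(lra) H).
  pose proof (HLT (2*y) ltac:(lra)). rewrite Rpower_neg4 in H2 by lra.
  assert (0 <= 4/27 * (a*y*z)^3 * (a*y)).
  { pose proof (mul3_nonneg a y z ltac:(lra) ltac:(lra) ltac:(lra)). apply Rmult_le_pos. apply Rmult_le_pos. lra.
    apply pow_le; lra. nra. }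
  assert (0 <= cW * / (2*y)^4) by (apply Rmult_le_pos; [lra| left; apply Rinv_0_lt_compat; apply pow_lt; lra]).
  apply Rle_trans with (4/27 * (a*y*z)^3 * (a*y) * (cW * / (2*y)^4)).
  - unfold c. replace (4/27 * (a*y*z)^3 * (a*y) * (cW * / (2*y)^4)) with (cW * a^4 * z^3 / 108)
      by (field; lra). lra.
  - apply Rmult_le_compat; auto. lra.
Qed.

Definition dyadic_point (i : nat) : R := match i with O => 0 | S j => A0 * 2^j end.

Lemma abel_sum_dyadic_ge m j : (forall i, (j <= i < j + m)%nat -> c <= (D (dyadic_point (S i)) - D (dyadic_point i)) * F (dyadic_point (S i))) ->
  INR m * c <= abel_sum L D (dyadic_point j) (map dyadic_point (seq (S j) m)).
Proof.
  revert j. induction m; intros j H; simpl.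
  - lra.
  - pose proof (H j ltac:(lia)). pose proof (IHm (S j) ltac:(intros i Hi; apply H; lia)).
    destruct m; simpl in *; lra.
Qed.

Lemma lsum_deficit_dyadic_ge n : a * (A0 * 2^n) * z <= 1 ->
  pos_partition (map dyadic_point (seq 1 (S n))) /\ INR (S n) * c <= lsum L D (map dyadic_point (seq 1 (S n))).
Proof.
  intros Hn.
  assert (Hpow : forall i, (i <= n)%nat -> a * (A0 * 2^i) * z <= 1).
  { intros i Hi. eapply Rle_trans; [|exact Hn].
    pose proof (Rle_pow 2 i n ltac:(lra) Hi).
    assert (A0 * 2^i <= A0 * 2^n) by (apply Rmult_le_compat_l; lra).
    pose proof (affine_le_compat a z 0 _ _ ltac:(lra) ltac:(lra) H0). lra. }
  destruct (lower_sum_as_lsum L dyadic_point (S n) eq_refl) as [Hok _].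
  { intros i Hi. destruct i; simpl. apply Rmult_lt_0_compat; lra.
    assert (0 < A0 * 2^i) by (apply Rmult_lt_0_compat; [lra| apply pow_lt; lra]). lra. }
  split; auto.
  rewrite lsum_abel_sum. assert (D 0 = 0) by (unfold D, deficit; ring). rewrite H.
  change 0 with (dyadic_point 0) at 2.
  pose proof (abel_sum_dyadic_ge (S n) 0) as K. simpl plus in K.
  rewrite Rplus_0_l. apply K.
  intros i Hi. destruct i.
  - simpl. rewrite Rmult_1_r. apply dyadic_term_first. pose proof (Hpow 0%nat ltac:(lia)). simpl in H0. lra.
  - change (dyadic_point (S (S i))) with (A0 * 2^(S i)). change (dyadic_point (S i)) with (A0 * 2^i).
    replace (A0 * 2^(S i)) with (2 * (A0 * 2^i)) by (simpl; ring).
    assert (1 <= 2^i) by (apply pow_R1_Rle; lra).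
    apply dyadic_term. nra. nra. apply Hpow. lia.
Qed.

End DyadicScales.

Definition inv_nu (EW EW2 : R) := EW / EW2.
Definition cosh_hi (EW EW2 : R) := cosh (beta_c EW EW2 + 1).
Definition alpha_lo (EW EW2 : R) := alpha EW (beta_c EW EW2).
Definition alpha_hi (EW EW2 : R) := alpha EW (beta_c EW EW2 + 1).

Section CriticalWindow.
Variables EW EW2 : R.
Hypothesis HEW : 0 < EW.
Hypothesis HEW2 : 0 < EW2.

Lemma inv_nu_pos : 0 < inv_nu EW EW2.
Proof. unfold inv_nu. apply Rdiv_lt_0_compat; auto. Qed.

Lemma sinh_beta_c : sinh (beta_c EW EW2) = inv_nu EW EW2.
Proof. unfold beta_c, nu, inv_nu. rewrite sinh_arcsinh. field. split; lra. Qed.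

Lemma beta_c_pos : 0 < beta_c EW EW2.
Proof.
  unfold beta_c. rewrite <- arcsinh_0. apply arcsinh_lt.
  unfold nu. apply Rdiv_lt_0_compat; [lra| apply Rdiv_lt_0_compat; auto].
Qed.

Lemma alpha_sq beta : 0 <= sinh beta -> alpha EW beta ^ 2 = sinh beta / EW.
Proof.
  intros H. unfold alpha. rewrite <- Rsqr_pow2. apply Rsqr_sqrt.
  unfold Rdiv. apply Rmult_le_pos; [lra| left; apply Rinv_0_lt_compat; lra].
Qed.

Lemma alpha_lo_pos : 0 < alpha_lo EW EW2.
Proof.
  unfold alpha_lo, alpha. apply sqrt_lt_R0. rewrite sinh_beta_c.
  apply Rdiv_lt_0_compat; auto. apply inv_nu_pos.
Qed.

(* With [s := alpha^2 E[W^2]], the relation [s - 1 = (sinh beta - sinh beta_c) / sinh beta_c]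
   turns [s - 1] into a quantity comparable to [beta - beta_c]. *)
Lemma alpha_window beta : beta_c EW EW2 < beta < beta_c EW EW2 + 1 ->
  0 < alpha EW beta /\ alpha_lo EW EW2 <= alpha EW beta <= alpha_hi EW EW2 /\
  (beta - beta_c EW EW2) / inv_nu EW EW2 <= alpha EW beta ^ 2 * EW2 - 1
    <= cosh_hi EW EW2 / inv_nu EW EW2 * (beta - beta_c EW EW2) /\
  1 <= alpha EW beta ^ 2 * EW2.
Proof.
  intros Hb. pose proof inv_nu_pos. pose proof beta_c_pos.
  assert (Hs : inv_nu EW EW2 < sinh beta) by (rewrite <- sinh_beta_c; apply sinh_lt; lra).
  assert (Hs2 : sinh beta <= sinh (beta_c EW EW2 + 1)) by (left; apply sinh_lt; lra).
  assert (Ha2 := alpha_sq beta ltac:(lra)).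
  assert (Hap : 0 < alpha EW beta) by (unfold alpha; apply sqrt_lt_R0; apply Rdiv_lt_0_compat; lra).
  assert (E : alpha EW beta ^ 2 * EW2 - 1 = (sinh beta - sinh (beta_c EW EW2)) / inv_nu EW EW2).
  { rewrite Ha2, sinh_beta_c. unfold inv_nu. field. split; lra. }
  pose proof (sinh_sub_ge (beta_c EW EW2) beta ltac:(lra)).
  pose proof (sinh_sub_le (beta_c EW EW2) beta (cosh_hi EW EW2) ltac:(lra) ltac:(lra)
    (cosh_le_compat beta (beta_c EW EW2 + 1) ltac:(lra) ltac:(lra))).
  assert (Hinv : 0 < / inv_nu EW EW2) by (apply Rinv_0_lt_compat; lra).
  assert (Hmono : forall x y, 0 < x <= y -> sqrt (x / EW) <= sqrt (y / EW)).
  { intros x y Hxy. apply sqrt_le_1_alt. apply Rmult_le_compat_r; [left; apply Rinv_0_lt_compat|]; lra. }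
  repeat split; auto.
  - unfold alpha_lo, alpha. rewrite sinh_beta_c. apply Hmono. lra.
  - unfold alpha_hi, alpha. apply Hmono. lra.
  - rewrite E. unfold Rdiv. apply Rmult_le_compat_r; lra.
  - rewrite E. unfold Rdiv.
    replace (cosh_hi EW EW2 * / inv_nu EW EW2 * (beta - beta_c EW EW2))
      with (cosh_hi EW EW2 * (beta - beta_c EW EW2) * / inv_nu EW EW2) by ring.
    apply Rmult_le_compat_r; lra.
  - assert (0 <= (sinh beta - sinh (beta_c EW EW2)) / inv_nu EW EW2)
      by (unfold Rdiv; apply Rmult_le_pos; lra). lra.
Qed.

End CriticalWindow.

Lemma continuity_of_lipschitz (f : R -> R) K : 0 <= K -> (forall x y, f x - f y <= K * Rabs (x - y)) -> continuity f.
Proof.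
  intros HK Hf x. unfold continuity_pt, continue_in, limit1_in, limit_in. intros eps Heps.
  exists (eps / (K + 1)). split. apply Rdiv_lt_0_compat; lra.
  intros y [_ Hy]. simpl in *. unfold R_dist in *.
  pose proof (Hf y x). pose proof (Hf x y). rewrite Rabs_minus_sym in H0.
  assert (K * Rabs (y - x) < eps).
  { apply Rle_lt_trans with ((K+1) * Rabs (y - x)). pose proof (Rabs_pos (y-x)). nra.
    apply (Rmult_lt_compat_l (K+1)) in Hy; [|lra]. replace ((K+1) * (eps / (K+1))) with eps in Hy by (field; lra). lra. }
  unfold Rabs at 1. destruct (Rcase_abs (f y - f x)); lra.
Qed.

Lemma Rmax0_lipschitz z1 z2 : Rabs (Rmax z1 0 - Rmax z2 0) <= Rabs (z1 - z2).
Proof.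
  unfold Rmax, Rabs. destruct (Rle_dec z1 0), (Rle_dec z2 0), (Rcase_abs (z1 - z2));
  try destruct (Rcase_abs (0 - 0)); try destruct (Rcase_abs (0 - z2)); try destruct (Rcase_abs (z1 - 0));
  try destruct (Rcase_abs (z1 - z2)); lra.
Qed.

Section FixedPointExistence.
Variable L : nonneg_law.
Notation F := (Fbar L).
Variables EW EW2 : R.
Hypothesis HEW : Expect L (fun t => t) EW.
Hypothesis HEW2 : Expect L (fun t => t^2) EW2.
Variables a B r : R.
Hypothesis Ha : 0 < a.
Hypothesis HB : 0 < B.
Hypothesis Hr : 0 < r.
Hypothesis HFr : 0 < F r.

Let clipped_integrand z := fun t => tanh (a * t * Rmax z 0 + B) * (a * t).

Lemma clipped_integrand_Expect_exists z : exists e, Expect L (clipped_integrand z) e.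
Proof.
  apply (Expect_exists_of_dominated L _ (fun t => a * t) (a * EW) (Expect_scaled_id L EW HEW a Ha)).
  intros t Ht. unfold clipped_integrand. pose proof (tanh_lt_1 (a * t * Rmax z 0 + B)). assert (0 <= a*t) by nra. nra.
Qed.

Let clipped_map z := proj1_sig (constructive_indefinite_description _ (clipped_integrand_Expect_exists z)).

Lemma clipped_map_spec z : Expect L (clipped_integrand z) (clipped_map z).
Proof. unfold clipped_map. destruct (constructive_indefinite_description _ (clipped_integrand_Expect_exists z)). simpl. auto. Qed.

Lemma clipped_map_lipschitz z1 z2 : clipped_map z1 - clipped_map z2 <= (a^2 * EW2) * Rabs (z1 - z2).
Proof.
  assert (clipped_map z1 <= 1 * clipped_map z2 + (a^2 * Rabs (z1 - z2)) * EW2).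
  { apply (Expect_le_lin2 L (clipped_integrand z1) (clipped_integrand z2) (fun t => t^2) _ _ _ 1 (a^2 * Rabs (z1 - z2)) (clipped_map_spec z1) (clipped_map_spec z2) HEW2).
    lra. pose proof (Rabs_pos (z1 - z2)). pose proof (pow2_ge_0 a). nra.
    intros t Ht. unfold clipped_integrand.
    set (x1 := a * t * Rmax z1 0 + B). set (x2 := a * t * Rmax z2 0 + B).
    assert (tanh x1 - tanh x2 <= Rabs (x1 - x2)).
    { destruct (Rle_dec x1 x2). pose proof (tanh_lipschitz x1 x2 r0). pose proof (Rabs_pos (x1 - x2)). lra.
      pose proof (tanh_lipschitz x2 x1 ltac:(lra)). rewrite Rabs_right; lra. }
    assert (Rabs (x1 - x2) <= a * t * Rabs (z1 - z2)).
    { unfold x1, x2. replace (a * t * Rmax z1 0 + B - (a * t * Rmax z2 0 + B)) with ((a*t) * (Rmax z1 0 - Rmax z2 0)) by ring.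
      rewrite Rabs_mult. rewrite (Rabs_right (a*t)) by nra. apply Rmult_le_compat_l. nra. apply Rmax0_lipschitz. }
    assert (0 <= a * t) by nra.
    assert ((tanh x1 - tanh x2) * (a*t) <= (a*t*Rabs (z1 - z2)) * (a*t)) by (apply Rmult_le_compat_r; lra).
    replace (a ^ 2 * Rabs (z1 - z2) * t ^ 2) with ((a*t*Rabs (z1 - z2)) * (a*t)) by ring. lra. }
  assert (a^2 * Rabs (z1 - z2) * EW2 = a^2 * EW2 * Rabs (z1 - z2)) by ring. lra.
Qed.

(* Intermediate value theorem for [z - E[tanh (a W max(z,0) + B) a W]], negative at a small
   [z] (the point [r] carries mass) and positive at [z = a E[W] + 1]. *)
Lemma fixed_point_exists : exists z, 0 < z /\ Expect L (fun t => tanh (a * t * z + B) * (a * t)) z.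
Proof.
  assert (HEW2p : 0 <= EW2).
  { pose proof (Expect_ge_point L _ EW2 r HEW2 Hr ltac:(simpl; lra)). pose proof (pow2_ge_0 r). nra. }
  set (f := fun z => z - clipped_map z).
  assert (Hc : continuity f).
  { apply (continuity_of_lipschitz f (1 + a^2 * EW2)). pose proof (pow2_ge_0 a). nra.
    intros x y. unfold f. pose proof (clipped_map_lipschitz y x). rewrite Rabs_minus_sym in H.
    pose proof (Rle_abs (x - y)). lra. }
  pose proof (tanh_nonneg B ltac:(lra)). pose proof (tanh_lt_1 B).
  assert (HtB : 0 < tanh B).
  { pose proof (tanh_ge_lin (Rmin B 1) ltac:(unfold Rmin; destruct (Rle_dec B 1); lra)).
    pose proof (tanh_le_compat (Rmin B 1) B (Rmin_l _ _)). assert (0 < Rmin B 1) by (unfold Rmin; destruct (Rle_dec B 1); lra). lra. }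
  set (z0 := tanh B * (a * r * F r) / 2).
  assert (Hz0 : 0 < z0) by (unfold z0; assert (0 < a * r * F r) by (repeat apply Rmult_lt_0_compat; auto); nra).
  assert (HrF : r * F r <= EW) by (apply (Expect_ge_point L _ EW r HEW Hr); lra).
  assert (Hf0 : f z0 < 0).
  { unfold f. pose proof (Expect_ge_point L (clipped_integrand z0) (clipped_map z0) r (clipped_map_spec z0) Hr).
    unfold clipped_integrand in H1. rewrite Rmax_left in H1 by lra.
    assert (0 <= tanh (a * 0 * z0 + B) * (a * 0)) by (rewrite Rmult_0_r; lra).
    specialize (H1 H2).
    assert (tanh B <= tanh (a * r * z0 + B)) by (apply tanh_le_compat; pose proof (mul3_nonneg a r z0 ltac:(lra) ltac:(lra) ltac:(lra)); lra).
    assert (tanh B * (a * r) * F r <= tanh (a * r * z0 + B) * (a * r) * F r).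
    { apply Rmult_le_compat_r. lra. apply Rmult_le_compat_r. nra. auto. }
    unfold z0 in *. lra. }
  set (z1 := a * EW + 1).
  assert (Hf1 : 0 < f z1).
  { unfold f. assert (clipped_map z1 <= a * EW).
    { apply (Expect_le L _ _ _ _ (clipped_map_spec z1) (Expect_scaled_id L EW HEW a Ha)). intros t Ht. unfold clipped_integrand.
      pose proof (tanh_lt_1 (a * t * Rmax z1 0 + B)). assert (0 <= a*t) by nra. nra. }
    assert (z1 = a * EW + 1) by reflexivity. lra. }
  assert (Hz01 : z0 < z1).
  { unfold z0, z1. assert (a * r * F r <= a * EW) by (rewrite Rmult_assoc; apply Rmult_le_compat_l; lra).
    assert (0 < a * r * F r) by (repeat apply Rmult_lt_0_compat; auto). nra. }
  destruct (IVT f z0 z1 Hc Hz01 Hf0 Hf1) as [z [Hz Hfz]].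
  exists z. split. lra.
  assert (clipped_map z = z) by (unfold f in Hfz; lra).
  pose proof (clipped_map_spec z). rewrite H1 in H2. unfold clipped_integrand in H2. rewrite Rmax_left in H2 by lra. exact H2.
Qed.

End FixedPointExistence.

Section Scaling.
Variable L : nonneg_law.
Variables EW EW2 : R.
Hypothesis HEW : Expect L (fun t => t) EW.
Hypothesis HEW2 : Expect L (fun t => t^2) EW2.
Hypothesis EWpos : 0 < EW.
Variable r : R.
Hypothesis Hr : 0 < r.
Hypothesis HFr : 0 < Fbar L r.

Local Notation F := (Fbar L).
Local Notation sc := (inv_nu EW EW2).
Local Notation Ksc := (cosh_hi EW EW2 / inv_nu EW EW2).
Local Notation alo := (alpha_lo EW EW2).
Local Notation ahi := (alpha_hi EW EW2).

Lemma EW2_pos : 0 < EW2.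
Proof.
  pose proof (Expect_ge_point L _ EW2 r HEW2 Hr ltac:(simpl; lra)).
  assert (0 < r^2) by (apply pow_lt; lra). nra.
Qed.

Lemma Ksc_pos : 0 < Ksc.
Proof.
  pose proof (inv_nu_pos EW EW2 EWpos EW2_pos). pose proof (cosh_ge_1 (beta_c EW EW2 + 1)).
  unfold cosh_hi. apply Rdiv_lt_0_compat; lra.
Qed.

Lemma alpha_lo_le_hi : 0 < alo <= ahi.
Proof.
  destruct (alpha_window EW EW2 EWpos EW2_pos (beta_c EW EW2 + 1/2) ltac:(lra))
    as [Ha [[Hlo Hhi] _]].
  pose proof alpha_lo_pos EW EW2 EWpos EW2_pos. lra.
Qed.

Definition zeta0 := Rmin (/ (ahi * r)) (alo * EW / 2).

Lemma zeta0_pos : 0 < zeta0.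
Proof.
  pose proof alpha_lo_le_hi. unfold zeta0, Rmin.
  destruct (Rle_dec _ _); [apply Rinv_0_lt_compat|]; nra.
Qed.

Definition Qc := 27/4 * EW * (Ksc + 1) / (r * F r).

Lemma Qc_pos : 0 < Qc.
Proof.
  pose proof Ksc_pos. unfold Qc. apply Rdiv_lt_0_compat; [|nra].
  apply Rmult_lt_0_compat; lra.
Qed.

(* The constant of the five scaling relations below, for a lower bound [kU * g] of the
   deficit sum and an upper bound [K * g] of the cubic deficit. *)
Definition rel_const kU K :=
  (Ksc + ahi * EW) / kU + sc * K + 3 / (alo * EW) * K + ahi * EW + 3 / (2 * alo * r * F r) + 1.

Lemma rel_const_ge kU K : 0 < kU -> 0 <= K ->
  (Ksc + ahi * EW) / kU <= rel_const kU K /\ sc * K <= rel_const kU K /\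
  3 / (alo * EW) * K <= rel_const kU K /\ ahi * EW <= rel_const kU K /\
  3 / (2 * alo * r * F r) <= rel_const kU K /\ 1 <= rel_const kU K.
Proof.
  intros HkU HK. pose proof Ksc_pos. pose proof alpha_lo_le_hi.
  pose proof (inv_nu_pos EW EW2 EWpos EW2_pos).
  assert (0 <= (Ksc + ahi * EW) / kU) by (apply Rlt_le, Rdiv_lt_0_compat; nra).
  assert (0 <= sc * K) by nra.
  assert (0 <= 3 / (alo * EW) * K) by (apply Rmult_le_pos; [apply Rlt_le, Rdiv_lt_0_compat; nra| lra]).
  assert (0 <= ahi * EW) by nra.
  assert (0 <= 3 / (2 * alo * r * F r))
    by (apply Rlt_le, Rdiv_lt_0_compat; [lra|]; repeat apply Rmult_lt_0_compat; lra).
  unfold rel_const. repeat split; lra.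
Qed.

Section Instance.
Variables beta B z m : R.
Hypothesis Hbeta : beta_c EW EW2 < beta < beta_c EW EW2 + 1.
Hypothesis HB : 0 < B < 1.
Hypothesis Hz : 0 < z.
Hypothesis Hfix : Expect L (fun t => tanh (alpha EW beta * t * z + B) * (alpha EW beta * t)) z.
Hypothesis Hm : Expect L (fun t => tanh (alpha EW beta * t * z + B)) m.

Local Notation a := (alpha EW beta).
Local Notation t := (beta - beta_c EW EW2).

Let window := alpha_window EW EW2 EWpos EW2_pos beta Hbeta.

Lemma lsum_deficit_le_window l : pos_partition l ->
  lsum L (deficit a B z) l <= Ksc * t * z + ahi * EW * B.
Proof.
  intros Hl. destruct window as [Ha [[Ha1 Ha2] [[Hs1 Hs2] Hs3]]].
  pose proof (lsum_deficit_le L EW EW2 HEW HEW2 a B z Ha ltac:(lra) Hz Hfix l Hl).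
  assert ((a^2 * EW2 - 1) * z <= Ksc * t * z) by (apply Rmult_le_compat_r; lra).
  assert (0 <= (ahi - a) * (EW * B)) by (apply Rmult_le_pos; nra).
  lra.
Qed.

Lemma min_cube_le : Rmin (a * r * z) 1 ^ 3 <= Qc * (t + B).
Proof.
  destruct window as [Ha [[Ha1 Ha2] [[Hs1 Hs2] Hs3]]].
  pose proof (deficit_point_le L EW EW2 HEW HEW2 a B z Ha ltac:(lra) Hz Hfix r Hr) as HU.
  pose proof (mul3_nonneg a r z ltac:(lra) ltac:(lra) ltac:(lra)).
  pose proof (sub_tanh_ge_cubic_min (a*r*z) H).
  pose proof (sub_tanh_le_compat (a*r*z) (a*r*z+B) ltac:(lra)).
  pose proof (fixed_point_le L EW HEW a B z Ha Hfix).
  pose proof Ksc_pos.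
  set (mm := Rmin (a * r * z) 1 ^ 3) in *.
  assert (Hmm : 0 <= mm) by (unfold mm; apply pow_le; unfold Rmin; destruct (Rle_dec _ _); lra).
  assert (HD : 4/27 * mm * (a * r) * F r <= (a^2 * EW2 - 1) * z + a * B * EW).
  { apply Rle_trans with ((a * r * z + B - tanh (a * r * z + B)) * (a * r) * F r); auto.
    apply Rmult_le_compat_r; [lra|]. apply Rmult_le_compat_r; [nra| lra]. }
  assert ((a^2 * EW2 - 1) * z <= Ksc * t * (a * EW)).
  { apply Rle_trans with (Ksc * t * z); [apply Rmult_le_compat_r; lra|].
    apply Rmult_le_compat_l; nra. }
  assert (Hb : 4/27 * mm * (a * r) * F r <= a * EW * (Ksc + 1) * (t + B)).
  { assert (a * EW * (Ksc + 1) * (t + B) = Ksc * t * (a * EW) + a * B * EW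
       + a * EW * (Ksc * B + t)) by ring.
    assert (0 <= a * EW * (Ksc * B + t)) by (apply Rmult_le_pos; nra). lra. }
  unfold Qc. apply (Rmult_le_reg_l (4/27 * (a * r) * F r)); [apply Rmult_lt_0_compat; nra|].
  replace (4 / 27 * (a * r) * F r * (27 / 4 * EW * (Ksc + 1) / (r * F r) * (t + B)))
    with (a * EW * (Ksc + 1) * (t + B))
    by (pose proof (inv_nu_pos EW EW2 EWpos EW2_pos); field; repeat split; lra).
  lra.
Qed.

Lemma cubic_deficit_ge eH : Expect L (cubic_deficit a z) eH ->
  t * z <= sc * eH /\ (z <= a * EW / 2 -> B <= 3 / (alo * EW) * eH).
Proof.
  intros HeH. destruct window as [Ha [[Ha1 Ha2] [[Hs1 Hs2] Hs3]]].
  pose proof (fixed_point_ge L EW EW2 HEW HEW2 a B z Ha ltac:(lra) Hz Hfix eH HeH) as HL.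
  pose proof (fixed_point_le L EW HEW a B z Ha Hfix).
  pose proof (tanh_nonneg B ltac:(lra)). pose proof (tanh_lt_1 B).
  pose proof (inv_nu_pos EW EW2 EWpos EW2_pos). pose proof alpha_lo_le_hi.
  assert (HeH0 : 0 <= eH).
  { apply (Expect_le L (fun _ => 0) _ 0 eH (Expect_const L 0) HeH). intros u Hu.
    pose proof (sub_tanh_nonneg (a*u*z) (mul3_nonneg a u z ltac:(lra) Hu ltac:(lra))).
    unfold cubic_deficit. apply Rmult_le_pos; nra. }
  assert (K2 : (a^2 * EW2 - 1) * z <= eH).
  { apply (Rmult_le_reg_l (1 - tanh B)); [lra|].
    assert (tanh B * (a * EW) >= tanh B * z) by (apply Rmult_ge_compat_l; lra). nra. }
  split.
  - apply Rle_trans with (sc * ((a^2 * EW2 - 1) * z)); [|apply Rmult_le_compat_l; lra].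
    apply (Rmult_le_reg_l (/ sc)); [apply Rinv_0_lt_compat; lra|].
    replace (/ sc * (t * z)) with (t / sc * z) by (field; lra).
    replace (/ sc * (sc * ((a^2 * EW2 - 1) * z))) with ((a^2 * EW2 - 1) * z) by (field; lra).
    apply Rmult_le_compat_r; lra.
  - intros Hz2.
    assert (K3 : tanh B * (a * EW - z) <= eH).
    { assert (0 <= (a^2 * EW2 - 1) * z) by (apply Rmult_le_pos; lra). nra. }
    pose proof (tanh_ge_lin B ltac:(lra)).
    assert (2/3 * B * (a * EW / 2) <= eH)
      by (apply Rle_trans with (tanh B * (a * EW - z)); auto; apply Rmult_le_compat; nra).
    apply (Rmult_le_reg_l (alo * EW / 3)); [nra|].
    replace (alo * EW / 3 * (3 / (alo * EW) * eH)) with eH by (field; lra).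
    assert (0 <= (a - alo) * (EW * B)) by (apply Rmult_le_pos; nra). nra.
Qed.

Lemma magnetization_window :
  m <= ahi * EW * z + B /\ (a * r * z <= 1 -> z <= 3 / (2 * alo * r * F r) * m).
Proof.
  destruct window as [Ha [[Ha1 Ha2] [[Hs1 Hs2] Hs3]]]. pose proof alpha_lo_le_hi.
  split.
  - pose proof (magnetization_le L EW HEW a B z Ha ltac:(lra) Hz m Hm).
    assert (0 <= (ahi - a) * (EW * z)) by (apply Rmult_le_pos; nra). nra.
  - intros H1. destruct (magnetization_ge L a B z Ha ltac:(lra) Hz m r Hm Hr) as [_ H2].
    pose proof (mul3_nonneg a r z ltac:(lra) ltac:(lra) ltac:(lra)).
    pose proof (tanh_ge_lin (a*r*z) ltac:(lra)).
    assert (2/3 * (alo * r * z) * F r <= m).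
    { apply Rle_trans with (tanh (a*r*z) * F r); auto. apply Rmult_le_compat_r; [lra|].
      apply Rle_trans with (2/3 * (a*r*z)); auto. apply Rmult_le_compat_l; [lra|].
      repeat apply Rmult_le_compat_r; lra. }
    apply (Rmult_le_reg_l (2 * alo * r * F r / 3)); [repeat apply Rmult_lt_0_compat; nra|].
    replace (2 * alo * r * F r / 3 * (3 / (2 * alo * r * F r) * m)) with m
      by (field; repeat split; lra).
    lra.
Qed.

Lemma z_lt_of_small zeta : 0 < zeta -> zeta <= / (ahi * r) ->
  Qc * (t + B) < (alo * r * zeta) ^ 3 -> z < zeta.
Proof.
  intros Hze Hzr HQ. destruct window as [Ha [[Ha1 Ha2] _]]. pose proof alpha_lo_le_hi.
  pose proof min_cube_le. apply Rnot_le_lt. intros Hc.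
  assert (alo * r * zeta <= 1).
  { apply Rle_trans with (ahi * r * zeta); [apply Rmult_le_compat_r; [lra|]; apply Rmult_le_compat_r; lra|].
    apply (Rmult_le_reg_l (/ (ahi * r))); [apply Rinv_0_lt_compat; nra|].
    replace (/ (ahi * r) * (ahi * r * zeta)) with zeta by (field; split; lra). lra. }
  assert (alo * r * zeta <= a * r * z).
  { apply Rle_trans with (a * r * zeta); [repeat apply Rmult_le_compat_r; lra|].
    apply Rmult_le_compat_l; nra. }
  assert (Rmin (a * r * z) 1 >= alo * r * zeta) by (unfold Rmin; destruct (Rle_dec _ _); lra).
  assert ((alo * r * zeta)^3 <= Rmin (a * r * z) 1 ^ 3)
    by (apply pow_incr; split; [|lra]; repeat apply Rmult_le_pos; lra).
  lra.
Qed.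

Lemma mul_le_1_of_le_inv p q x : 0 < p -> 0 <= q <= p -> 0 <= x <= / p -> q * x <= 1.
Proof.
  intros Hp Hq Hx. apply Rle_trans with (p * x); [apply Rmult_le_compat_r; lra|].
  apply (Rmult_le_reg_l (/ p)); [apply Rinv_0_lt_compat; lra|].
  replace (/ p * (p * x)) with x by (field; lra). rewrite Rmult_1_r. lra.
Qed.

Lemma small_z : z <= zeta0 -> a * r * z <= 1 /\ z <= a * EW / 2.
Proof.
  intros Hzz. destruct window as [Ha [[Ha1 Ha2] _]]. pose proof alpha_lo_le_hi.
  pose proof (Rmin_l (/ (ahi * r)) (alo * EW / 2)). pose proof (Rmin_r (/ (ahi * r)) (alo * EW / 2)).
  unfold zeta0 in Hzz. split; [|nra].
  apply (mul_le_1_of_le_inv (ahi * r)); try split; nra.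
Qed.

(* [g] plays the role of [z^delta] (with a logarithm when tau = 5). *)
Lemma scaling_relations kU K g l eH : 0 < kU -> 0 <= K -> 0 <= g -> z <= zeta0 ->
  pos_partition l -> kU * g <= lsum L (deficit a B z) l ->
  Expect L (cubic_deficit a z) eH -> eH <= K * g ->
  g <= rel_const kU K * (t * z + B) /\ t * z <= rel_const kU K * g /\
  B <= rel_const kU K * g /\ m <= rel_const kU K * (z + B) /\ z <= rel_const kU K * m.
Proof.
  intros HkU HK Hg Hzz Hl Hlow HeH HeHb.
  destruct (rel_const_ge kU K HkU HK) as [Q1 [Q2 [Q3 [Q4 [Q5 Q6]]]]].
  destruct window as [Ha [[Ha1 Ha2] _]]. pose proof alpha_lo_le_hi.
  pose proof (inv_nu_pos EW EW2 EWpos EW2_pos). pose proof Ksc_pos.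
  destruct (small_z Hzz) as [Harz Hz2].
  destruct (cubic_deficit_ge eH HeH) as [G3a G3b]. specialize (G3b Hz2).
  destruct magnetization_window as [G4a G4b]. specialize (G4b Harz).
  pose proof (lsum_deficit_le_window l Hl) as HU.
  assert (Ht : 0 < t) by lra.
  repeat split.
  - apply Rle_trans with ((Ksc + ahi * EW) / kU * (t * z + B)); [|apply Rmult_le_compat_r; nra].
    apply (Rmult_le_reg_l kU); auto.
    replace (kU * ((Ksc + ahi * EW) / kU * (t * z + B))) with ((Ksc + ahi * EW) * (t * z + B))
      by (field; lra).
    assert (0 <= ahi * EW * (t * z)) by (apply Rmult_le_pos; nra). nra.
  - apply Rle_trans with (sc * (K * g)); [nra|].
    rewrite <- Rmult_assoc. apply Rmult_le_compat_r; lra.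
  - apply Rle_trans with (3 / (alo * EW) * (K * g)).
    + eapply Rle_trans; [exact G3b|]. apply Rmult_le_compat_l; [apply Rlt_le, Rdiv_lt_0_compat; nra| lra].
    + rewrite <- Rmult_assoc. apply Rmult_le_compat_r; lra.
  - assert (ahi * EW * z <= rel_const kU K * z) by (apply Rmult_le_compat_r; lra). nra.
  - eapply Rle_trans; [exact G4b|]. apply Rmult_le_compat_r; [|lra].
    destruct (magnetization_ge L a B z Ha ltac:(lra) Hz m r Hm Hr) as [Hm1 _].
    pose proof (tanh_nonneg B ltac:(lra)). lra.
Qed.

End Instance.

(* Near criticality every positive solution z is small, since [Rmin (a r z) 1 ^ 3 <= Qc (t + B)];
   so two-sided bounds need only be proved for [z < zeta]. *)
Lemma crit_bounds_of_small_z (f : R -> R -> R) zeta eps0 c1 C1 :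
  0 < zeta -> zeta <= / (ahi * r) -> 0 < eps0 -> 0 < c1 -> 0 < C1 ->
  (forall beta B z m, beta_c EW EW2 < beta < beta_c EW EW2 + 1 -> 0 < B < 1 -> B < eps0 ->
     beta - beta_c EW EW2 < eps0 -> 0 < z -> z < zeta ->
     Expect L (fun t => tanh (alpha EW beta * t * z + B) * (alpha EW beta * t)) z ->
     Expect L (fun t => tanh (alpha EW beta * t * z + B)) m ->
     c1 * f beta B <= m <= C1 * f beta B) ->
  crit_bounds L EW EW2 f.
Proof.
  intros Hz1 Hz2 He0 Hc1 HC1 Hinst.
  pose proof Qc_pos. pose proof alpha_lo_le_hi.
  set (q := (alo * r * zeta) ^ 3 / (2 * Qc)).
  assert (Hq : 0 < q)
    by (unfold q; apply Rdiv_lt_0_compat; [apply pow_lt; repeat apply Rmult_lt_0_compat|]; lra).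
  exists (Rmin (Rmin eps0 1) q), c1, C1.
  assert (Hm1 : Rmin (Rmin eps0 1) q <= Rmin eps0 1) by apply Rmin_l.
  assert (Hm2 : Rmin (Rmin eps0 1) q <= q) by apply Rmin_r.
  assert (Hm3 : Rmin eps0 1 <= eps0) by apply Rmin_l.
  assert (Hm4 : Rmin eps0 1 <= 1) by apply Rmin_r.
  assert (Hm5 : 0 < Rmin (Rmin eps0 1) q) by (unfold Rmin; repeat destruct (Rle_dec _ _); lra).
  split; [auto| split; [auto| split; [auto|]]].
  intros B beta HB Hb.
  assert (Hb' : beta_c EW EW2 < beta < beta_c EW EW2 + 1) by lra.
  split.
  - destruct (alpha_window EW EW2 EWpos EW2_pos beta Hb') as [Ha _].
    destruct (fixed_point_exists L EW EW2 HEW HEW2 (alpha EW beta) B r Ha ltac:(lra) Hr HFr)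
      as [z [Hz Hfz]].
    exists z. split; auto.
  - intros m [z [[Hz Hfz] Hm]].
    assert (Hzz : z < zeta).
    { apply (z_lt_of_small beta B z Hb' ltac:(lra) Hz Hfz zeta Hz1 Hz2).
      apply Rlt_le_trans with (Qc * (2 * q)); [apply Rmult_lt_compat_l; lra|].
      unfold q. right. field. lra. }
    apply (Hinst beta B z m Hb' ltac:(lra) ltac:(lra) ltac:(lra) Hz Hzz Hfz Hm).
Qed.

End Scaling.

Section FiniteFourthMoment.
Variable L : nonneg_law.
Variables EW EW2 : R.
Hypothesis HEW : Expect L (fun t => t) EW.
Hypothesis HEW2 : Expect L (fun t => t^2) EW2.
Hypothesis EWpos : 0 < EW.
Variable r : R.
Hypothesis Hr : 0 < r.
Hypothesis HFr : 0 < Fbar L r.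
Variable e4 : R.
Hypothesis He4 : Expect L (fun t => t^4) e4.

Local Notation F := (Fbar L).
Local Notation alo := (alpha_lo EW EW2).
Local Notation ahi := (alpha_hi EW EW2).

Definition kU_fourth := 4/27 * alo^4 * r^4 * F r.
Definition K_fourth := ahi^4 * e4 / 3.
Definition A_fourth := rel_const L EW EW2 r kU_fourth K_fourth.

Lemma kU_fourth_pos : 0 < kU_fourth.
Proof.
  pose proof (alpha_lo_le_hi L EW EW2 HEW2 EWpos r Hr HFr).
  unfold kU_fourth. repeat apply Rmult_lt_0_compat; try apply pow_lt; lra.
Qed.

Lemma K_fourth_nonneg : 0 <= K_fourth.
Proof.
  pose proof (alpha_lo_le_hi L EW EW2 HEW2 EWpos r Hr HFr).
  pose proof (Expect_ge_point L _ e4 r He4 Hr ltac:(simpl; lra)).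
  assert (0 < r^4) by (apply pow_lt; lra). pose proof (pow_le ahi 4 ltac:(lra)).
  pose proof (Fbar_range L r). assert (0 <= e4) by nra.
  unfold K_fourth, Rdiv. apply Rmult_le_pos; [apply Rmult_le_pos|]; lra.
Qed.

Lemma deficit_ge_fourth a B z : 0 < a -> alo <= a -> 0 < B -> 0 < z -> a * r * z <= 1 ->
  kU_fourth * z^3 <= lsum L (deficit a B z) [r].
Proof.
  intros Ha Halo HB Hz Harz.
  assert (deficit a B z 0 = 0) by (unfold deficit; ring).
  rewrite lsum_single, H, Rmult_0_l, Rplus_0_l.
  pose proof (deficit_ge_cubic a B z Ha HB Hz r ltac:(lra) Harz) as HD.
  replace (4 / 27 * (a * r * z) ^ 3 * (a * r)) with (4/27 * a^4 * r^4 * z^3) in HD by ring.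
  pose proof (alpha_lo_le_hi L EW EW2 HEW2 EWpos r Hr HFr).
  assert (alo^4 <= a^4) by (apply pow_incr; lra).
  pose proof (Fbar_range L r). pose proof (pow_lt r 4 Hr). pose proof (pow_lt z 3 Hz).
  assert (4/27 * a^4 * r^4 * z^3 * F r <= deficit a B z r * F r) by (apply Rmult_le_compat_r; lra).
  assert (4/27 * alo^4 * r^4 * F r * z^3 <= 4/27 * a^4 * r^4 * z^3 * F r).
  { replace (4/27 * alo^4 * r^4 * F r * z^3) with (4/27 * alo^4 * r^4 * z^3 * F r) by ring.
    apply Rmult_le_compat_r; [lra|]. repeat apply Rmult_le_compat_r; lra. }
  unfold kU_fourth. lra.
Qed.

Lemma cubic_deficit_le_fourth a z eH : 0 < a -> a <= ahi -> 0 < z ->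
  Expect L (cubic_deficit a z) eH -> eH <= K_fourth * z^3.
Proof.
  intros Ha Hahi Hz HeH.
  unfold K_fourth. replace (ahi^4 * e4 / 3 * z^3) with ((ahi^4 * z^3 / 3) * e4) by field.
  apply Rle_trans with ((a^4 * z^3 / 3) * e4).
  - apply (Expect_le_scale L _ _ eH e4 _ HeH He4).
    + pose proof (pow_lt a 4 Ha). pose proof (pow_lt z 3 Hz). nra.
    + intros u Hu. unfold cubic_deficit.
      pose proof (tanh_ge_cubic (a*u*z) (mul3_nonneg a u z ltac:(lra) Hu ltac:(lra))).
      assert (0 <= a * u) by nra.
      assert ((a * u * z - tanh (a * u * z)) * (a * u) <= ((a*u*z)^3/3) * (a*u))
        by (apply Rmult_le_compat_r; lra).
      replace (a ^ 4 * z ^ 3 / 3 * u ^ 4) with (((a*u*z)^3/3) * (a*u)) by field. lra.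
  - pose proof (Expect_ge_point L _ e4 r He4 Hr ltac:(simpl; lra)).
    pose proof (pow_lt r 4 Hr). pose proof (Fbar_range L r). pose proof (pow_lt z 3 Hz).
    assert (0 <= e4) by nra.
    apply Rmult_le_compat_r; [lra|]. apply Rmult_le_compat_r; [lra|].
    apply Rmult_le_compat_r; [lra|]. apply pow_incr. lra.
Qed.

Lemma five_relations_fourth beta B z m : beta_c EW EW2 < beta < beta_c EW EW2 + 1 -> 0 < B < 1 ->
  0 < z -> z < zeta0 EW EW2 r ->
  Expect L (fun t => tanh (alpha EW beta * t * z + B) * (alpha EW beta * t)) z ->
  Expect L (fun t => tanh (alpha EW beta * t * z + B)) m ->
  Rpower z 3 <= A_fourth * ((beta - beta_c EW EW2) * z + B) /\
  (beta - beta_c EW EW2) * z <= A_fourth * Rpower z 3 /\ B <= A_fourth * Rpower z 3 /\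
  m <= A_fourth * (z + B) /\ z <= A_fourth * m.
Proof.
  intros Hb HB Hz Hzz Hfix Hm.
  destruct (alpha_window EW EW2 EWpos (EW2_pos L EW2 HEW2 r Hr HFr) beta Hb) as [Ha [[Ha3 Ha4] _]].
  destruct (small_z L EW EW2 HEW2 EWpos r Hr HFr beta z Hb Hz ltac:(lra)) as [Harz _].
  replace 3 with (INR 3) by (simpl; ring). rewrite Rpower_pow by lra. simpl INR.
  destruct (cubic_deficit_Expect_exists L EW2 HEW2 (alpha EW beta) z Ha Hz) as [eH HeH].
  apply (scaling_relations L EW EW2 HEW HEW2 EWpos r Hr HFr beta B z m Hb HB Hz Hfix Hm
    kU_fourth K_fourth (z^3) [r] eH kU_fourth_pos K_fourth_nonneg
    ltac:(apply pow_le; lra) ltac:(lra) (pos_partition_single r Hr)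
    (deficit_ge_fourth _ B z Ha Ha3 ltac:(lra) Hz Harz) HeH
    (cubic_deficit_le_fourth _ z eH Ha Ha4 Hz HeH)).
Qed.

Theorem crit_bounds_fourth_moment : crit_bounds L EW EW2 (fun beta B =>
  Rpower (beta - beta_c EW EW2) (1 / 2) + Rpower B (1 / 3)).
Proof.
  pose proof (rel_const_ge L EW EW2 HEW2 EWpos r Hr HFr kU_fourth K_fourth kU_fourth_pos
    K_fourth_nonneg) as [_ [_ [_ [_ [_ HA]]]]].
  fold A_fourth in HA.
  apply (crit_bounds_of_small_z L EW EW2 HEW HEW2 EWpos r Hr HFr _ (zeta0 EW EW2 r) 1
     (/2 * Rmin (Rpower (/A_fourth) (1/(3-1))) (Rpower (/A_fourth) (1/3)) / A_fourth)
     (A_fourth * (Rpower (2*A_fourth) (1/(3-1)) + Rpower (2*A_fourth) (1/3) + 1))).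
  - apply (zeta0_pos L EW EW2 HEW2 EWpos r Hr HFr).
  - apply Rmin_l.
  - lra.
  - apply Rdiv_lt_0_compat; [|lra]. apply Rmult_lt_0_compat; [lra|].
    unfold Rmin; destruct (Rle_dec _ _); apply Rpower_pos.
  - pose proof (Rpower_pos (2*A_fourth) (1/(3-1))). pose proof (Rpower_pos (2*A_fourth) (1/3)).
    apply Rmult_lt_0_compat; lra.
  - intros beta B z m Hb HB _ _ Hz Hzz Hfix Hm.
    destruct (five_relations_fourth beta B z m Hb HB Hz Hzz Hfix Hm) as [I1 [I2 [I3 [I4 I5]]]].
    pose proof (magnetization_power_bounds 3 A_fourth (beta - beta_c EW EW2) B z m
      ltac:(lra) ltac:(lra) ltac:(lra) HB Hz I1 I2 I3 I4 I5) as K.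
    replace (1/(3-1)) with (1/2) in * by field. rewrite !Rmult_assoc in K |- *. exact K.
Qed.

End FiniteFourthMoment.

Section PowerLawTail.
Variable L : nonneg_law.
Variables EW EW2 : R.
Hypothesis HEW : Expect L (fun t => t) EW.
Hypothesis HEW2 : Expect L (fun t => t^2) EW2.
Hypothesis EWpos : 0 < EW.
Variable r : R.
Hypothesis Hr : 0 < r.
Hypothesis HFr : 0 < Fbar L r.
Variables tau cW CW w0 : R.
Hypothesis Htau : 3 < tau < 5.
Hypothesis HcW : 0 < cW.
Hypothesis HCW : cW < CW.
Hypothesis Hw0 : 1 < w0.
Hypothesis HPL : forall x, w0 < x ->
  cW * Rpower x (- (tau - 1)) <= Fbar L x <= CW * Rpower x (- (tau - 1)).

Local Notation F := (Fbar L).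
Local Notation alo := (alpha_lo EW EW2).
Local Notation ahi := (alpha_hi EW EW2).
Local Notation A0 := (w0 + 1).

Definition kU_tau := 4/27 * cW * Rpower alo (tau - 1).
Definition K_tau := ahi^4 * A0^4 + Rpower ahi (tau - 1) * CW * (4 / (5 - tau) + 2 / (tau - 3)).
Definition A_tau := rel_const L EW EW2 r kU_tau K_tau.
Definition zeta_tau := Rmin (zeta0 EW EW2 r) (Rmin 1 (/ (ahi * A0))).

Lemma kU_tau_pos : 0 < kU_tau.
Proof. unfold kU_tau. apply Rmult_lt_0_compat; [lra| apply Rpower_pos]. Qed.

Lemma K_tau_nonneg : 0 <= K_tau.
Proof.
  pose proof (alpha_lo_le_hi L EW EW2 HEW2 EWpos r Hr HFr).
  assert (0 <= ahi^4 * A0^4) by (apply Rmult_le_pos; apply pow_le; lra).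
  assert (0 < 4 / (5 - tau)) by (apply Rdiv_lt_0_compat; lra).
  assert (0 < 2 / (tau - 3)) by (apply Rdiv_lt_0_compat; lra).
  pose proof (Rpower_pos ahi (tau - 1)).
  assert (0 <= Rpower ahi (tau - 1) * CW * (4 / (5 - tau) + 2 / (tau - 3)))
    by (apply Rmult_le_pos; [apply Rmult_le_pos|]; lra).
  unfold K_tau. lra.
Qed.

Section Scale.
Variables a z : R.
Hypothesis Ha : 0 < a.
Hypothesis Hz : 0 < z.
Hypothesis Halo : alo <= a.
Hypothesis Hahi : a <= ahi.
Hypothesis Hz1 : z <= 1.
Hypothesis HaA : a * z * A0 <= 1.

Let M := / (a * z).

Let A0_le_M : A0 <= M.
Proof.
  unfold M. apply (Rmult_le_reg_l (a * z)); [nra|]. rewrite Rinv_r by nra. lra.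
Qed.

Let Rpower_M p : Rpower M p = Rpower a (- p) * Rpower z (- p).
Proof. unfold M. rewrite Rpower_Rinv_base by nra. rewrite Rpower_mult_distr by lra. auto. Qed.

Let Rpower_shift x n p : 0 < x -> x ^ n * Rpower x p = Rpower x (INR n + p).
Proof. intros. rewrite Rpower_plus, Rpower_pow; auto. Qed.

(* The point [M = 1/(a z)], where [a M z = 1], already carries the mass
   [F M >= cW (a z)^(tau - 1)] that makes the deficit of order [z^(tau - 2)]. *)
Lemma deficit_ge_tau B : 0 < B -> kU_tau * Rpower z (tau - 2) <= lsum L (deficit a B z) [M].
Proof.
  intros HB. assert (HM : 0 < M) by (unfold M; apply Rinv_0_lt_compat; nra).
  assert (deficit a B z 0 = 0) by (unfold deficit; ring).
  rewrite lsum_single, H, Rmult_0_l, Rplus_0_l.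
  assert (EaMz : a * M * z = 1) by (unfold M; field; lra).
  assert (EaM : a * M = / z) by (unfold M; field; lra).
  unfold deficit. rewrite EaMz, EaM.
  pose proof (sub_tanh_ge_cubic_min (1 + B) ltac:(lra)) as Hd. rewrite Rmin_right in Hd by lra.
  destruct (HPL M ltac:(lra)) as [HFM _].
  rewrite Rpower_M in HFM. replace (- - (tau - 1)) with (tau - 1) in HFM by ring.
  assert (HzI : 0 < / z) by (apply Rinv_0_lt_compat; lra).
  assert (Rz : Rpower z (tau - 1) = z * Rpower z (tau - 2)).
  { replace (tau - 1) with (1 + (tau - 2)) by ring. rewrite Rpower_plus, Rpower_1; auto. }
  assert (Ralo : Rpower alo (tau - 1) <= Rpower a (tau - 1)).
  { apply Rle_Rpower_l; [lra|]. split; auto.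
    apply (alpha_lo_pos EW EW2 EWpos (EW2_pos L EW2 HEW2 r Hr HFr)). }
  pose proof (Rpower_pos z (tau - 2)). pose proof (Rpower_pos a (tau - 1)).
  apply Rle_trans with (4/27 * / z * (cW * (Rpower a (tau - 1) * Rpower z (tau - 1)))).
  - rewrite Rz.
    replace (4 / 27 * / z * (cW * (Rpower a (tau - 1) * (z * Rpower z (tau - 2)))))
      with (4/27 * cW * Rpower a (tau - 1) * Rpower z (tau - 2)) by (field; lra).
    unfold kU_tau. apply Rmult_le_compat_r; [lra|]. apply Rmult_le_compat_l; lra.
  - apply Rmult_le_compat; [nra| apply Rmult_le_pos; [lra| apply Rmult_le_pos; [lra| left; apply Rpower_pos]]| |lra].
    apply Rmult_le_compat_r; lra.
Qed.

Lemma tail_terms_le_tau ek1 ek2 :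
  Expect L (fun t => clamp A0 M t ^ 4 - A0 ^ 4) ek1 ->
  Expect L (fun t => Rmax t M ^ 2 - M ^ 2) ek2 ->
  a^4 * z^3 * ek1 + a^2 * z * ek2
    <= Rpower ahi (tau - 1) * CW * (4 / (5 - tau) + 2 / (tau - 3)) * Rpower z (tau - 2).
Proof.
  intros Hk1 Hk2.
  assert (HPLu : forall x, w0 < x -> F x <= CW * Rpower x (- (tau - 1))) by (intros; apply HPL; auto).
  pose proof (Expect_clamp_pow4_le L tau CW w0 Hw0 ltac:(lra) ltac:(lra) HPLu A0 M ek1 ltac:(lra)
    A0_le_M ltac:(lra) Hk1) as Tk1.
  pose proof (Expect_tail_sq_le L tau CW w0 Hw0 ltac:(lra) ltac:(lra) HPLu M ek2
    ltac:(pose proof A0_le_M; lra) Hk2) as Tk2.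
  rewrite Rpower_M in Tk1, Tk2.
  replace (- (5 - tau)) with (tau - 5) in Tk1 by ring.
  replace (- (3 - tau)) with (tau - 3) in Tk2 by ring.
  assert (P4z : 0 <= a^4 * z^3) by (apply Rmult_le_pos; apply pow_le; lra).
  assert (P2z : 0 <= a^2 * z) by (apply Rmult_le_pos; [apply pow_le|]; lra).
  apply (Rmult_le_compat_l _ _ _ P4z) in Tk1. apply (Rmult_le_compat_l _ _ _ P2z) in Tk2.
  replace (a ^ 4 * z ^ 3 * (CW * (4 / (5 - tau)) * (Rpower a (tau - 5) * Rpower z (tau - 5))))
    with (CW * (4 / (5 - tau)) * ((a^4 * Rpower a (tau - 5)) * (z^3 * Rpower z (tau - 5))))
    in Tk1 by ring.
  replace (a ^ 2 * z * (CW * (2 / (tau - 3)) * (Rpower a (tau - 3) * Rpower z (tau - 3))))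
    with (CW * (2 / (tau - 3)) * ((a^2 * Rpower a (tau - 3)) * (z^1 * Rpower z (tau - 3))))
    in Tk2 by ring.
  rewrite !Rpower_shift in Tk1, Tk2 by lra.
  replace (INR 4 + (tau - 5)) with (tau - 1) in Tk1 by (simpl; ring).
  replace (INR 3 + (tau - 5)) with (tau - 2) in Tk1 by (simpl; ring).
  replace (INR 2 + (tau - 3)) with (tau - 1) in Tk2 by (simpl; ring).
  replace (INR 1 + (tau - 3)) with (tau - 2) in Tk2 by (simpl; ring).
  assert (Rpower a (tau - 1) <= Rpower ahi (tau - 1)) by (apply Rle_Rpower_l; lra).
  pose proof (Rpower_pos z (tau - 2)).
  assert (0 < CW * (4 / (5 - tau))) by (apply Rmult_lt_0_compat; [lra| apply Rdiv_lt_0_compat; lra]).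
  assert (0 < CW * (2 / (tau - 3))) by (apply Rmult_lt_0_compat; [lra| apply Rdiv_lt_0_compat; lra]).
  assert (CW * (4 / (5 - tau)) * (Rpower a (tau - 1) * Rpower z (tau - 2))
          <= CW * (4 / (5 - tau)) * (Rpower ahi (tau - 1) * Rpower z (tau - 2)))
    by (apply Rmult_le_compat_l; [|apply Rmult_le_compat_r]; lra).
  assert (CW * (2 / (tau - 3)) * (Rpower a (tau - 1) * Rpower z (tau - 2))
          <= CW * (2 / (tau - 3)) * (Rpower ahi (tau - 1) * Rpower z (tau - 2)))
    by (apply Rmult_le_compat_l; [|apply Rmult_le_compat_r]; lra).
  lra.
Qed.

Lemma cubic_deficit_le_tau eH : Expect L (cubic_deficit a z) eH -> eH <= K_tau * Rpower z (tau - 2).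
Proof.
  intros HeH.
  destruct (cubic_deficit_split L EW2 HEW2 a z A0 Ha Hz ltac:(lra) A0_le_M eH HeH)
    as [ek1 [ek2 [Hk1 [Hk2 Hsp]]]].
  fold M in Hk1, Hk2.
  pose proof (tail_terms_le_tau ek1 ek2 Hk1 Hk2).
  assert (a^4 * z^3 * A0^4 <= ahi^4 * A0^4 * Rpower z (tau - 2)).
  { assert (z^3 <= Rpower z (tau - 2)).
    { rewrite <- (Rpower_pow 3 z) by auto. apply Rpower_le_exp_base_le_1; [lra| simpl; lra]. }
    assert (a^4 <= ahi^4) by (apply pow_incr; lra).
    pose proof (pow_le A0 4 ltac:(lra)). pose proof (pow_le z 3 ltac:(lra)).
    pose proof (pow_le a 4 ltac:(lra)).
    replace (a ^ 4 * z ^ 3 * A0 ^ 4) with ((a^4 * A0^4) * z^3) by ring.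
    apply Rmult_le_compat; nra. }
  unfold K_tau. lra.
Qed.

End Scale.

Lemma zeta_tau_facts z : z < zeta_tau ->
  z < zeta0 EW EW2 r /\ z <= 1 /\ z <= / (ahi * A0).
Proof.
  intros Hz. unfold zeta_tau in Hz.
  pose proof (Rmin_l (zeta0 EW EW2 r) (Rmin 1 (/ (ahi * A0)))).
  pose proof (Rmin_r (zeta0 EW EW2 r) (Rmin 1 (/ (ahi * A0)))).
  pose proof (Rmin_l 1 (/ (ahi * A0))). pose proof (Rmin_r 1 (/ (ahi * A0))). lra.
Qed.

Lemma five_relations_tau beta B z m : beta_c EW EW2 < beta < beta_c EW EW2 + 1 -> 0 < B < 1 ->
  0 < z -> z < zeta_tau ->
  Expect L (fun t => tanh (alpha EW beta * t * z + B) * (alpha EW beta * t)) z ->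
  Expect L (fun t => tanh (alpha EW beta * t * z + B)) m ->
  Rpower z (tau - 2) <= A_tau * ((beta - beta_c EW EW2) * z + B) /\
  (beta - beta_c EW EW2) * z <= A_tau * Rpower z (tau - 2) /\ B <= A_tau * Rpower z (tau - 2) /\
  m <= A_tau * (z + B) /\ z <= A_tau * m.
Proof.
  intros Hb HB Hz Hzz Hfix Hm.
  destruct (zeta_tau_facts z Hzz) as [Hz0 [Hz1 HzA]].
  pose proof (alpha_lo_le_hi L EW EW2 HEW2 EWpos r Hr HFr).
  destruct (alpha_window EW EW2 EWpos (EW2_pos L EW2 HEW2 r Hr HFr) beta Hb) as [Ha [[Ha3 Ha4] _]].
  assert (HaA : alpha EW beta * z * A0 <= 1).
  { replace (alpha EW beta * z * A0) with (alpha EW beta * A0 * z) by ring.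
    apply (mul_le_1_of_le_inv (ahi * A0)); try split; nra. }
  destruct (cubic_deficit_Expect_exists L EW2 HEW2 (alpha EW beta) z Ha Hz) as [eH HeH].
  apply (scaling_relations L EW EW2 HEW HEW2 EWpos r Hr HFr beta B z m Hb HB Hz Hfix Hm
    kU_tau K_tau (Rpower z (tau - 2)) [/ (alpha EW beta * z)] eH kU_tau_pos K_tau_nonneg
    ltac:(left; apply Rpower_pos) ltac:(lra)).
  - apply pos_partition_single. apply Rinv_0_lt_compat. nra.
  - apply deficit_ge_tau; lra.
  - exact HeH.
  - apply (cubic_deficit_le_tau (alpha EW beta) z); auto.
Qed.

Theorem crit_bounds_power_law : crit_bounds L EW EW2 (fun beta B =>
  Rpower (beta - beta_c EW EW2) (1 / (tau - 3)) + Rpower B (1 / (tau - 2))).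
Proof.
  pose proof (alpha_lo_le_hi L EW EW2 HEW2 EWpos r Hr HFr).
  pose proof (rel_const_ge L EW EW2 HEW2 EWpos r Hr HFr kU_tau K_tau kU_tau_pos K_tau_nonneg)
    as [_ [_ [_ [_ [_ HA]]]]].
  fold A_tau in HA.
  assert (Hzeta : 0 < zeta_tau).
  { pose proof (zeta0_pos L EW EW2 HEW2 EWpos r Hr HFr). unfold zeta_tau, Rmin.
    repeat destruct (Rle_dec _ _); try apply Rinv_0_lt_compat; nra. }
  apply (crit_bounds_of_small_z L EW EW2 HEW HEW2 EWpos r Hr HFr _ zeta_tau 1
     (/2 * Rmin (Rpower (/A_tau) (1/(tau - 2 - 1))) (Rpower (/A_tau) (1/(tau - 2))) / A_tau)
     (A_tau * (Rpower (2*A_tau) (1/(tau - 2 - 1)) + Rpower (2*A_tau) (1/(tau - 2)) + 1))); auto.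
  - unfold zeta_tau, zeta0. eapply Rle_trans; apply Rmin_l.
  - lra.
  - apply Rdiv_lt_0_compat; [|lra]. apply Rmult_lt_0_compat; [lra|].
    unfold Rmin; destruct (Rle_dec _ _); apply Rpower_pos.
  - pose proof (Rpower_pos (2*A_tau) (1/(tau - 2 - 1))). pose proof (Rpower_pos (2*A_tau) (1/(tau - 2))).
    apply Rmult_lt_0_compat; lra.
  - intros beta B z m Hb HB _ _ Hz Hzz Hfix Hm.
    destruct (five_relations_tau beta B z m Hb HB Hz Hzz Hfix Hm) as [I1 [I2 [I3 [I4 I5]]]].
    pose proof (magnetization_power_bounds (tau - 2) A_tau (beta - beta_c EW EW2) B z m
      ltac:(lra) ltac:(lra) ltac:(lra) HB Hz I1 I2 I3 I4 I5) as K.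
    replace (tau - 2 - 1) with (tau - 3) in * by ring. rewrite !Rmult_assoc in K |- *. exact K.
Qed.

End PowerLawTail.

Lemma ln_2_pos : 0 < ln 2.
Proof. pose proof ln_lt_2. lra. Qed.

Lemma ln_2_lt_1 : ln 2 < 1.
Proof.
  rewrite <- (ln_exp 1). apply ln_increasing; [lra|].
  pose proof (exp_ineq1 1 ltac:(lra)). lra.
Qed.

Section PowerLawTailFive.
Variable L : nonneg_law.
Variables EW EW2 : R.
Hypothesis HEW : Expect L (fun t => t) EW.
Hypothesis HEW2 : Expect L (fun t => t^2) EW2.
Hypothesis EWpos : 0 < EW.
Variable r : R.
Hypothesis Hr : 0 < r.
Hypothesis HFr : 0 < Fbar L r.
Variables cW CW w0 : R.
Hypothesis HcW : 0 < cW.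
Hypothesis HCW : cW < CW.
Hypothesis Hw0 : 1 < w0.
Hypothesis HPL : forall x, w0 < x ->
  cW * Rpower x (- (5 - 1)) <= Fbar L x <= CW * Rpower x (- (5 - 1)).

Local Notation F := (Fbar L).
Local Notation alo := (alpha_lo EW EW2).
Local Notation ahi := (alpha_hi EW EW2).
Local Notation A0 := (w0 + 1).

Definition kU_log := cW * alo^4 / 216.
Definition K_log := ahi^4 * (A0^4 + 4 * CW * Rabs (ln alo) + 5 * CW).
Definition A_log := rel_const L EW EW2 r kU_log K_log.
Definition z_log := exp (- (2 * (Rabs (ln ahi) + ln A0) + 1)).
Definition zeta_log := Rmin (zeta0 EW EW2 r) (Rmin z_log (/ (ahi * A0))).

Lemma alo_pos : 0 < alo.
Proof. apply (alpha_lo_pos EW EW2 EWpos (EW2_pos L EW2 HEW2 r Hr HFr)). Qed.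

Lemma kU_log_pos : 0 < kU_log.
Proof.
  pose proof alo_pos. unfold kU_log.
  apply Rdiv_lt_0_compat; [apply Rmult_lt_0_compat; [lra| apply pow_lt; lra]| lra].
Qed.

Lemma K_log_nonneg : 0 <= K_log.
Proof.
  pose proof (alpha_lo_le_hi L EW EW2 HEW2 EWpos r Hr HFr).
  unfold K_log. apply Rmult_le_pos; [apply pow_le; lra|].
  pose proof (Rabs_pos (ln alo)). pose proof (pow_le A0 4 ltac:(lra)). nra.
Qed.

Lemma ln_A0_pos : 0 < ln A0.
Proof. rewrite <- ln_1. apply ln_increasing; lra. Qed.

Lemma z_log_le z : 0 < z <= z_log -> 2 * (Rabs (ln ahi) + ln A0) + 1 <= ell z.
Proof.
  intros Hz. rewrite ell_eq by lra.
  assert (ln z <= - (2 * (Rabs (ln ahi) + ln A0) + 1))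
    by (rewrite <- (ln_exp (- (2 * (Rabs (ln ahi) + ln A0) + 1))); apply ln_le; unfold z_log in Hz; lra).
  lra.
Qed.

Lemma z_log_le_exp : z_log <= exp (-1).
Proof. pose proof ln_A0_pos. pose proof (Rabs_pos (ln ahi)). apply exp_le. lra. Qed.

Section Scale.
Variables a z : R.
Hypothesis Ha : 0 < a.
Hypothesis Hz : 0 < z.
Hypothesis Halo : alo <= a.
Hypothesis Hahi : a <= ahi.
Hypothesis Hzl : z <= z_log.
Hypothesis HaA : a * z * A0 <= 1.

Let M := / (a * z).

Let A0_le_M : A0 <= M.
Proof.
  unfold M. apply (Rmult_le_reg_l (a * z)); [nra|]. rewrite Rinv_r by nra. lra.
Qed.

Let M_pos : 0 < M.
Proof. unfold M. apply Rinv_0_lt_compat. nra. Qed.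

Let ln_M : ln M = ell z - ln a.
Proof. unfold M. rewrite ln_Rinv, ln_mult, ell_eq by nra. ring. Qed.

(* At tau = 5 each dyadic scale A0 2^i <= M contributes a term of order [z^3] to the deficit
   sum; there are about [log M ~ ell z] of them. *)
Lemma deficit_ge_log B : 0 < B -> exists l, pos_partition l /\
  kU_log * (z^3 * ell z) <= lsum L (deficit a B z) l.
Proof.
  intros HB. pose proof alo_pos. pose proof ln_A0_pos. pose proof (Rabs_pos (ln ahi)).
  pose proof (z_log_le z ltac:(lra)) as Lz.
  destruct (exists_dyadic_count (M / A0)
    ltac:(apply (Rmult_le_reg_l A0); [lra|]; field_simplify; pose proof A0_le_M; lra))
    as [n [Hn1 Hn2]].
  assert (Hn3 : a * (A0 * 2^n) * z <= 1).
  { apply (Rmult_le_compat_l A0) in Hn1; [|lra].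
    replace (A0 * (M / A0)) with M in Hn1 by (field; lra).
    apply Rle_trans with (a * M * z); [apply Rmult_le_compat_r; [lra| apply Rmult_le_compat_l; lra]|].
    unfold M. right. field. lra. }
  assert (HLT : forall x, w0 < x -> cW * Rpower x (- (5 - 1)) <= F x) by (intros; apply HPL; auto).
  destruct (lsum_deficit_dyadic_ge L cW w0 HcW HLT a B z A0 Ha HB Hz ltac:(lra) ltac:(lra) n Hn3)
    as [Hok Hge].
  exists (map (dyadic_point A0) (seq 1 (S n))). split; auto.
  assert (HlnX : ell z / 2 <= ln (M / A0)).
  { assert (ln a <= Rabs (ln ahi)) by (pose proof (ln_le a ahi Ha Hahi); pose proof (Rle_abs (ln ahi)); lra).
    pose proof M_pos.
    unfold Rdiv. rewrite ln_mult, ln_Rinv, ln_M by (try apply Rinv_0_lt_compat; nra).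
    lra. }
  pose proof ln_2_lt_1. pose proof ln_2_pos.
  assert (HX : ln (M / A0) <= ln (M / A0) / ln 2).
  { apply (Rmult_le_reg_r (ln 2)); auto.
    replace (ln (M / A0) / ln 2 * ln 2) with (ln (M / A0)) by (field; lra). nra. }
  set (cc := cW * a ^ 4 * z ^ 3 / 108) in *.
  assert (Hcc : 0 <= cc)
    by (unfold cc; apply Rmult_le_pos; [repeat apply Rmult_le_pos; try apply pow_le|]; lra).
  assert (cc * (ell z / 2) <= cc * INR (S n)) by (apply Rmult_le_compat_l; lra).
  assert (kU_log * (z^3 * ell z) <= cc * (ell z / 2)).
  { unfold kU_log, cc.
    replace (cW * alo ^ 4 / 216 * (z ^ 3 * ell z)) with ((cW * z^3 * ell z / 216) * alo^4) by field.
    replace (cW * a ^ 4 * z ^ 3 / 108 * (ell z / 2)) with ((cW * z^3 * ell z / 216) * a^4) by field.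
    apply Rmult_le_compat_l; [|apply pow_incr; lra].
    pose proof (pow_lt z 3 Hz). apply Rmult_le_pos; [|lra]. apply Rmult_le_pos; nra. }
  lra.
Qed.

Lemma cubic_deficit_le_log eH : Expect L (cubic_deficit a z) eH -> eH <= K_log * (z^3 * ell z).
Proof.
  intros HeH. pose proof alo_pos. pose proof ln_A0_pos. pose proof (Rabs_pos (ln ahi)).
  pose proof (z_log_le z ltac:(lra)) as Lz.
  destruct (cubic_deficit_split L EW2 HEW2 a z A0 Ha Hz ltac:(lra) A0_le_M eH HeH)
    as [ek1 [ek2 [Hk1 [Hk2 Hsp]]]].
  fold M in Hk1, Hk2.
  assert (HPLu : forall x, w0 < x -> F x <= CW * Rpower x (- (5 - 1))) by (intros; apply HPL; auto).
  pose proof (Expect_clamp_pow4_le_ln L 5 CW w0 Hw0 ltac:(lra) ltac:(lra) HPLu A0 M ek1 ltac:(lra)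
    A0_le_M eq_refl Hk1) as Tk1.
  pose proof (Expect_tail_sq_le L 5 CW w0 Hw0 ltac:(lra) ltac:(lra) HPLu M ek2
    ltac:(pose proof A0_le_M; lra) Hk2) as Tk2.
  assert (RM2 : Rpower M (3 - 5) = a^2 * z^2).
  { unfold M. rewrite Rpower_Rinv_base by nra. replace (- (3 - 5)) with (INR 2) by (simpl; ring).
    rewrite Rpower_pow by nra. ring. }
  rewrite RM2 in Tk2. replace (2 / (5 - 3)) with 1 in Tk2 by field.
  rewrite ln_M in Tk1.
  assert (lna_lo : - ln a <= Rabs (ln alo)).
  { pose proof (ln_le alo a ltac:(lra) Halo). pose proof (Rle_abs (- ln alo)).
    rewrite Rabs_Ropp in *. lra. }
  assert (P4z : 0 <= a^4 * z^3) by (apply Rmult_le_pos; apply pow_le; lra).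
  assert (T1 : a^4 * z^3 * ek1 <= a^4 * z^3 * (4 * CW * (ell z + Rabs (ln alo))))
    by (apply Rmult_le_compat_l; [auto| eapply Rle_trans; [exact Tk1| apply Rmult_le_compat_l; lra]]).
  assert (T2 : a^2 * z * ek2 <= a^4 * z^3 * CW).
  { eapply Rle_trans; [apply Rmult_le_compat_l; [apply Rmult_le_pos; [apply pow_le|]; lra| exact Tk2]|].
    right. ring. }
  assert (a^4 <= ahi^4) by (apply pow_incr; lra).
  assert (Hin : A0^4 + 4 * CW * Rabs (ln alo) + CW + 4 * CW * ell z
                <= (A0^4 + 4 * CW * Rabs (ln alo) + 5 * CW) * ell z).
  { pose proof (Rabs_pos (ln alo)). pose proof (pow_le A0 4 ltac:(lra)).
    assert (0 <= A0^4 + 4 * CW * Rabs (ln alo) + CW) by nra. nra. }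
  assert (a^4 * (z^3 * (A0^4 + 4 * CW * Rabs (ln alo) + CW + 4 * CW * ell z))
          <= ahi^4 * (z^3 * ((A0^4 + 4 * CW * Rabs (ln alo) + 5 * CW) * ell z))).
  { pose proof (Rabs_pos (ln alo)). pose proof (pow_le A0 4 ltac:(lra)).
    apply Rmult_le_compat; [apply pow_le; lra| apply Rmult_le_pos; nra| auto|].
    apply Rmult_le_compat_l; [apply pow_le|]; lra. }
  unfold K_log. nra.
Qed.

End Scale.

Lemma zeta_log_facts z : z < zeta_log ->
  z < zeta0 EW EW2 r /\ z <= z_log /\ z <= / (ahi * A0).
Proof.
  intros Hz. unfold zeta_log in Hz.
  pose proof (Rmin_l (zeta0 EW EW2 r) (Rmin z_log (/ (ahi * A0)))).
  pose proof (Rmin_r (zeta0 EW EW2 r) (Rmin z_log (/ (ahi * A0)))).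
  pose proof (Rmin_l z_log (/ (ahi * A0))). pose proof (Rmin_r z_log (/ (ahi * A0))). lra.
Qed.

Lemma five_relations_log beta B z m : beta_c EW EW2 < beta < beta_c EW EW2 + 1 -> 0 < B < 1 ->
  0 < z -> z < zeta_log ->
  Expect L (fun t => tanh (alpha EW beta * t * z + B) * (alpha EW beta * t)) z ->
  Expect L (fun t => tanh (alpha EW beta * t * z + B)) m ->
  z^3 * ell z <= A_log * ((beta - beta_c EW EW2) * z + B) /\
  (beta - beta_c EW EW2) * z <= A_log * (z^3 * ell z) /\ B <= A_log * (z^3 * ell z) /\
  m <= A_log * (z + B) /\ z <= A_log * m.
Proof.
  intros Hb HB Hz Hzz Hfix Hm.
  destruct (zeta_log_facts z Hzz) as [Hz0 [Hzl HzA]].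
  pose proof (alpha_lo_le_hi L EW EW2 HEW2 EWpos r Hr HFr).
  destruct (alpha_window EW EW2 EWpos (EW2_pos L EW2 HEW2 r Hr HFr) beta Hb) as [Ha [[Ha3 Ha4] _]].
  assert (HaA : alpha EW beta * z * A0 <= 1).
  { replace (alpha EW beta * z * A0) with (alpha EW beta * A0 * z) by ring.
    apply (mul_le_1_of_le_inv (ahi * A0)); try split; nra. }
  assert (1 <= ell z) by (apply ell_ge_1; pose proof z_log_le_exp; lra).
  destruct (cubic_deficit_Expect_exists L EW2 HEW2 (alpha EW beta) z Ha Hz) as [eH HeH].
  destruct (deficit_ge_log (alpha EW beta) z Ha Hz Ha3 Ha4 Hzl HaA B ltac:(lra)) as [l [Hl Hlow]].
  apply (scaling_relations L EW EW2 HEW HEW2 EWpos r Hr HFr beta B z m Hb HB Hz Hfix Hm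
    kU_log K_log (z^3 * ell z) l eH kU_log_pos K_log_nonneg
    ltac:(pose proof (pow_lt z 3 Hz); nra) ltac:(lra) Hl Hlow HeH).
  apply (cubic_deficit_le_log (alpha EW beta) z); auto.
Qed.

Theorem crit_bounds_power_law_five : crit_bounds L EW EW2 (fun beta B =>
  Rpower ((beta - beta_c EW EW2) / ln (1 / (beta - beta_c EW EW2))) (1 / 2)
  + Rpower (B / ln (1 / B)) (1 / 3)).
Proof.
  pose proof (alpha_lo_le_hi L EW EW2 HEW2 EWpos r Hr HFr).
  pose proof (rel_const_ge L EW EW2 HEW2 EWpos r Hr HFr kU_log K_log kU_log_pos K_log_nonneg)
    as [_ [_ [_ [_ [_ HA]]]]].
  fold A_log in HA.
  assert (Hth : 1 <= log_threshold A_log)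
    by (unfold log_threshold; pose proof (Rabs_pos (ln (2*A_log))); pose proof (Rabs_pos (ln A_log)); lra).
  assert (Heps : 0 < exp (- log_threshold A_log) < 1).
  { split; [apply exp_pos|]. rewrite <- exp_0. apply exp_increasing. lra. }
  assert (Hzeta : 0 < zeta_log).
  { pose proof (zeta0_pos L EW EW2 HEW2 EWpos r Hr HFr). unfold zeta_log, z_log, Rmin.
    pose proof (exp_pos (- (2 * (Rabs (ln ahi) + ln A0) + 1))).
    repeat destruct (Rle_dec _ _); try apply Rinv_0_lt_compat; nra. }
  apply (crit_bounds_of_small_z L EW EW2 HEW HEW2 EWpos r Hr HFr _ zeta_log
     (exp (- log_threshold A_log))
     (/2 * Rmin (Rpower (/(2*A_log)) (1/2)) (Rpower (/(2*A_log)) (1/3)) / A_log)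
     (A_log * (Rpower (8*A_log) (1/2) + Rpower (12*A_log) (1/3) + 1))); auto; try lra.
  - unfold zeta_log, zeta0. eapply Rle_trans; apply Rmin_l.
  - apply Rdiv_lt_0_compat; [|lra]. apply Rmult_lt_0_compat; [lra|].
    unfold Rmin; destruct (Rle_dec _ _); apply Rpower_pos.
  - pose proof (Rpower_pos (8*A_log) (1/2)). pose proof (Rpower_pos (12*A_log) (1/3)).
    apply Rmult_lt_0_compat; lra.
  - intros beta B z m Hb HB HBe Hte Hz Hzz Hfix Hm.
    destruct (five_relations_log beta B z m Hb HB Hz Hzz Hfix Hm) as [I1 [I2 [I3 [I4 I5]]]].
    destruct (zeta_log_facts z Hzz) as [_ [Hzl _]]. pose proof z_log_le_exp.
    pose proof (magnetization_log_bounds A_log (beta - beta_c EW EW2) B z m ltac:(lra) ltac:(lra)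
      HB ltac:(lra) (ell_gt_of_lt_exp (log_threshold A_log) (beta - beta_c EW EW2) ltac:(lra))
      (ell_gt_of_lt_exp (log_threshold A_log) B ltac:(lra))
      I1 I2 I3 I4 I5) as K.
    unfold ell in K. rewrite !Rmult_assoc in K |- *. exact K.
Qed.

End PowerLawTailFive.

Theorem mainTheorem2 (w : nat -> nat -> R) (L : nonneg_law) (EW EW2 : R) :
  weight_regularity w L EW EW2 ->
  (finite_moment L (fun t => t ^ 4) ->
     crit_bounds L EW EW2 (fun beta B =>
       Rpower (beta - beta_c EW EW2) (1 / 2) + Rpower B (1 / 3))) /\
  (forall tau, 3 < tau < 5 -> power_law_tail L tau ->
     crit_bounds L EW EW2 (fun beta B =>
       Rpower (beta - beta_c EW EW2) (1 / (tau - 3))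
       + Rpower B (1 / (tau - 2)))) /\
  (power_law_tail L 5 ->
     crit_bounds L EW EW2 (fun beta B =>
       Rpower ((beta - beta_c EW EW2) / ln (1 / (beta - beta_c EW EW2))) (1 / 2)
       + Rpower (B / ln (1 / B)) (1 / 3))).
Proof.
  intros [_ [_ [HEW [EWpos [HEW2 _]]]]].
  destruct (exists_Fbar_pos L EW HEW EWpos) as [r [Hr HFr]].
  split; [|split].
  - intros [e4 He4]. exact (crit_bounds_fourth_moment L EW EW2 HEW HEW2 EWpos r Hr HFr e4 He4).
  - intros tau Htau [cW [CW [w0 [HcW [HCW [Hw0 HPL]]]]]].
    exact (crit_bounds_power_law L EW EW2 HEW HEW2 EWpos r Hr HFr tau cW CW w0 Htau HcW HCW Hw0 HPL).
  - intros [cW [CW [w0 [HcW [HCW [Hw0 HPL]]]]]].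
    exact (crit_bounds_power_law_five L EW EW2 HEW HEW2 EWpos r Hr HFr cW CW w0 HcW HCW Hw0 HPL).
Qed.
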